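(* Let $\tau\in W^{1,\infty}((0,L);S^{n-1})$, $k\ge0$, $\lambda\in\mathbb{R}^n$ and $f\in W^{1,\infty}(0,L)\setminus\{0\}$ with $f\ge0$ be such that $f(\tau''+k^2\tau)=\beta k^2\,\mathrm{proj}^\perp_{\tau,\tau'}(\lambda)$ and $f'=\beta\,\lambda\cdot\tau'$ hold weakly in $(0,L)$ (the first in the sense $\int_0^L(f(\tau'\cdot\xi'-k^2\tau\cdot\xi)+f'\tau'\cdot\xi+k^2\beta\,\mathrm{proj}^\perp_{\tau,\tau'}(\lambda)\cdot\xi)\,dt=0$ for all $\xi\in C_0^\infty((0,L);\mathbb{R}^n)$). Then there exist $\tilde f\in W^{1,\infty}(0,L)\setminus\{0\}$ with $\tilde f\ge0$ and $\tilde\lambda\in S^{n-1}$ such that the same two equations hold weakly with $\tilde f$ in place of $f$ and $\tilde\lambda$ in place of $\lambda$.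
   Context: $\beta\colon[0,L]\to(0,\infty)$ is a function of bounded variation, bounded and bounded away from $0$ (it arises as $\beta=\alpha\circ\phi$ for a reparametrisation $\phi$). $\mathrm{proj}^\perp_{V,W}$ is the orthogonal projection onto the orthogonal complement of the span of $V,W\in\mathbb{R}^n$. *)

From Stdlib Require Import Reals Lra List.
Open Scope R_scope.

(* ---------- vectors of R^n, represented as nat -> R (indices < n) ---------- *)
Fixpoint dot (n : nat) (u v : nat -> R) : R :=
  match n with
  | O => 0
  | S m => dot m u v + u m * v m
  end.

Definition vsub (u v : nat -> R) : nat -> R := fun i => u i - v i.
Definition vscale (c : R) (u : nat -> R) : nat -> R := fun i => c * u i.

Definition remove_comp (n : nat) (u x : nat -> R) : nat -> R :=
  if Req_EM_T (dot n u u) 0 then x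
  else vsub x (vscale (dot n x u / dot n u u) u).

(* orthogonal projection onto the orthogonal complement of span{V, W}
   (Gram-Schmidt: W' := W - proj_V W, then remove components along V and W') *)
Definition proj_perp (n : nat) (V W x : nat -> R) : nat -> R :=
  remove_comp n (remove_comp n V W) (remove_comp n V x).

(* a tagged partition is a list of (tag, right endpoint) pairs *)
Fixpoint fine_part (delta : R -> R) (a b : R) (P : list (R * R)) : Prop :=
  match P with
  | nil => a = b
  | (t, x) :: P' => a < x /\ a <= t <= x /\ x - a < delta t /\ fine_part delta x b P'
  end.

Fixpoint rsum (g : R -> R) (a : R) (P : list (R * R)) : R :=
  match P with
  | nil => 0
  | (t, x) :: P' => g t * (x - a) + rsum g x P'
  end.

Definition HKint (g : R -> R) (a b I : R) : Prop :=
  forall eps, 0 < eps ->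
    exists delta : R -> R, (forall t, 0 < delta t) /\
      forall P, fine_part delta a b P -> Rabs (rsum g a P - I) < eps.

(* ---------- W^{1,infty}(0,L): f(t) = f(0) + int_0^t g with g bounded ---------- *)
Definition W1inf (L : R) (f g : R -> R) : Prop :=
  (exists M, forall t, 0 <= t <= L -> Rabs (g t) <= M) /\
  (forall t, 0 <= t <= L -> HKint g 0 t (f t - f 0)).

Fixpoint chain_in (b x : R) (l : list R) : Prop :=
  match l with
  | nil => True
  | y :: l' => x <= y /\ y <= b /\ chain_in b y l'
  end.

Fixpoint variation (beta : R -> R) (x : R) (l : list R) : R :=
  match l with
  | nil => 0
  | y :: l' => Rabs (beta y - beta x) + variation beta y l'
  end.

Definition bounded_variation (beta : R -> R) (a b : R) : Prop :=
  exists V, forall x0 l, a <= x0 -> chain_in b x0 l -> variation beta x0 l <= V.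

Definition beta_hyp (L : R) (beta : R -> R) : Prop :=
  bounded_variation beta 0 L /\
  exists m M, 0 < m /\ forall t, 0 <= t <= L -> m <= beta t <= M.

Definition test_fun (L : R) (phi phi' : R -> R) : Prop :=
  (exists D : nat -> R -> R, D 0%nat = phi /\ D 1%nat = phi' /\
     forall j x, derivable_pt_lim (D j) x (D (S j) x)) /\
  (exists a b, 0 < a /\ a <= b /\ b < L /\
     forall t, t < a \/ b < t -> phi t = 0).

Definition weak_eqs (n : nat) (L k : R) (beta : R -> R) (tau tau' : R -> nat -> R)
    (f f' : R -> R) (lam : nat -> R) : Prop :=
  (forall xi xi' : R -> nat -> R,
     (forall i, (i < n)%nat -> test_fun L (fun t => xi t i) (fun t => xi' t i)) ->
     HKint (fun t =>
        f t * (dot n (tau' t) (xi' t) - k ^ 2 * dot n (tau t) (xi t))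
        + f' t * dot n (tau' t) (xi t)
        + k ^ 2 * beta t * dot n (proj_perp n (tau t) (tau' t) lam) (xi t))
       0 L 0) /\
  (forall phi phi' : R -> R, test_fun L phi phi' ->
     HKint (fun t => f t * phi' t + beta t * dot n lam (tau' t) * phi t) 0 L 0).

From Stdlib Require Import Reals Lra List Lia ZArith Classical ClassicalEpsilon FunctionalExtensionality.
From Coquelicot Require Import Coquelicot.
Open Scope R_scope.
Set Bullet Behavior "Strict Subproofs".

(* If [lam <> 0], both equations are homogeneous of degree one in [(f, lam)], so [f / |lam|]
   and [lam / |lam|] do.  If [lam = 0], the second equation says that [f] is a nonzero
   constant, and the first one then says that [tau'' + k^2 tau = 0] weakly.  By the
   du Bois-Reymond lemma [tau] is then [C^2], and
   [tau 0 = cos (k t) tau t - sin (k t) / k tau' t] lies in [span {tau t, tau' t}], so the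
   projection term vanishes for [lam~ = tau 0].  With [f~ = C + int_0^t beta (tau 0 . tau')]
   the second equation holds by construction and the integrand of the first one is the
   derivative of [f~ (tau' . xi)]; [C] is taken large to make [f~] positive.
   All integrals are gauge (Henstock-Kurzweil) integrals; [beta (tau 0 . tau')] is
   integrable because [beta] has bounded variation and [tau 0 . tau'] is Lipschitz up to a
   null function. *)

(** * The gauge integral *)

Lemma mul_div_succ_lt x e : 0 <= x -> 0 < e -> x * (e / (x + 1)) < e.
Proof.
  intros Hx He. apply Rmult_lt_reg_r with (x + 1); [lra|].
  replace (x * (e / (x + 1)) * (x + 1)) with (x * e) by (field; lra). nra.
Qed.

Lemma fine_part_le d a b P : fine_part d a b P -> a <= b.
Proof.
  revert a; induction P as [|[t x] P IH]; simpl; intros a H.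
  - lra.
  - destruct H as (H1 & H2 & H3 & H4). specialize (IH _ H4). lra.
Qed.

Lemma fine_part_app d a b c P Q :
  fine_part d a b P -> fine_part d b c Q -> fine_part d a c (P ++ Q).
Proof.
  revert a; induction P as [|[t x] P IH]; simpl; intros a H1 H2.
  - subst; auto.
  - destruct H1 as (?&?&?&?). repeat split; auto; lra.
Qed.

Lemma fine_part_mono d d' a b P :
  (forall t, d t <= d' t) -> fine_part d a b P -> fine_part d' a b P.
Proof.
  intros Hd; revert a; induction P as [|[t x] P IH]; simpl; intros a H; auto.
  destruct H as (?&?&?&?). specialize (Hd t). repeat split; auto; lra.
Qed.

Lemma fine_part_min_l d1 d2 a b P :
  fine_part (fun t => Rmin (d1 t) (d2 t)) a b P -> fine_part d1 a b P.
Proof. apply fine_part_mono. intros; apply Rmin_l. Qed.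

Lemma fine_part_min_r d1 d2 a b P :
  fine_part (fun t => Rmin (d1 t) (d2 t)) a b P -> fine_part d2 a b P.
Proof. apply fine_part_mono. intros; apply Rmin_r. Qed.

Lemma gauge_min (d1 d2 : R -> R) : (forall t, 0 < d1 t) -> (forall t, 0 < d2 t) ->
  forall t, 0 < Rmin (d1 t) (d2 t).
Proof. intros; apply Rmin_glb_lt; auto. Qed.

Lemma rsum_app g d a b P Q :
  fine_part d a b P -> rsum g a (P ++ Q) = rsum g a P + rsum g b Q.
Proof.
  revert a; induction P as [|[t x] P IH]; simpl; intros a H1.
  - subst; ring.
  - destruct H1 as (?&?&?&?). rewrite (IH x); auto. ring.
Qed.

Lemma rsum_ext g h d a b P :
  (forall t, a <= t <= b -> g t = h t) -> fine_part d a b P -> rsum g a P = rsum h a P.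
Proof.
  revert a; induction P as [|[t x] P IH]; simpl; intros a Hg H; auto.
  destruct H as (?&?&?&?). pose proof (fine_part_le _ _ _ _ H2).
  rewrite Hg by lra. rewrite (IH x); auto. intros; apply Hg; lra.
Qed.

Lemma rsum_le g h d a b P :
  (forall t, a <= t <= b -> g t <= h t) -> fine_part d a b P -> rsum g a P <= rsum h a P.
Proof.
  revert a; induction P as [|[t x] P IH]; simpl; intros a Hg H; [lra|].
  destruct H as (?&?&?&?). pose proof (fine_part_le _ _ _ _ H2).
  assert (g t <= h t) by (apply Hg; lra).
  assert (rsum g x P <= rsum h x P) by (apply IH; auto; intros; apply Hg; lra).
  assert (g t * (x - a) <= h t * (x - a)) by (apply Rmult_le_compat_r; lra).
  lra.
Qed.

Lemma rsum_const c d a b P : fine_part d a b P -> rsum (fun _ => c) a P = c * (b - a).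
Proof.
  revert a; induction P as [|[t x] P IH]; simpl; intros a H.
  - subst; ring.
  - destruct H as (?&?&?&?). rewrite (IH x); auto. ring.
Qed.

Lemma rsum_plus g h a P : rsum (fun t => g t + h t) a P = rsum g a P + rsum h a P.
Proof.
  revert a; induction P as [|[t x] P IH]; simpl; intros a; [ring|]. rewrite IH; ring.
Qed.

Lemma rsum_scal c g a P : rsum (fun t => c * g t) a P = c * rsum g a P.
Proof.
  revert a; induction P as [|[t x] P IH]; simpl; intros a; [ring|]. rewrite IH; ring.
Qed.

(* Cousin's lemma: the supremum of the points reachable by a fine partition is [b]. *)
Lemma cousin d a b : (forall t, 0 < d t) -> a <= b -> exists P, fine_part d a b P.
Proof.
  intros Hd Hab.
  set (E := fun x => a <= x <= b /\ exists P, fine_part d a x P).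
  assert (Hb : bound E) by (exists b; intros x [Hx _]; lra).
  assert (Hne : exists x, E x) by (exists a; split; [lra| exists nil; reflexivity]).
  destruct (completeness E Hb Hne) as [s [Hs1 Hs2]].
  assert (Has : a <= s) by (apply Hs1; split; [lra | exists nil; reflexivity]).
  assert (Hsb : s <= b) by (apply Hs2; intros x [Hx _]; lra).
  assert (Hds := Hd s).
  assert (HsE : exists P, fine_part d a s P).
  { destruct (classic (exists y, E y /\ s - d s < y)) as [[y [[Hy [P HP]] Hy2]]|Hn].
    - assert (y <= s) by (apply Hs1; split; [auto| exists P; auto]).
      destruct (Req_dec y s) as [->|Hys]; [exists P; auto|].
      exists (P ++ (s,s)::nil). apply fine_part_app with y; auto. simpl. repeat split; lra.
    - exfalso.
      assert (is_upper_bound E (s - d s)).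
      { intros x Hx. apply Rnot_lt_le; intro; apply Hn; exists x; auto. }
      specialize (Hs2 _ H). lra. }
  destruct HsE as [P HP].
  destruct (Req_dec s b) as [<-|Hsb']; [exists P; auto|].
  exfalso. set (x' := Rmin b (s + d s / 2)).
  assert (Hx1 : s < x') by (unfold x'; apply Rmin_glb_lt; lra).
  assert (Hx2 : x' <= s + d s / 2) by apply Rmin_r.
  assert (Hx3 : x' <= b) by apply Rmin_l.
  assert (E x').
  { split; [lra|]. exists (P ++ (s,x')::nil). apply fine_part_app with s; auto.
    simpl; repeat split; lra. }
  specialize (Hs1 _ H). lra.
Qed.

Lemma HKint_unique g a b I J : a <= b -> HKint g a b I -> HKint g a b J -> I = J.
Proof.
  intros Hab HI HJ. destruct (Req_dec I J) as [|HIJ]; auto. exfalso.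
  set (e := Rabs (I - J) / 2).
  assert (He : 0 < e) by (unfold e; assert (0 < Rabs (I - J)) by (apply Rabs_pos_lt; lra); lra).
  destruct (HI e He) as [d1 [Hd1 H1]]. destruct (HJ e He) as [d2 [Hd2 H2]].
  destruct (cousin _ a b (gauge_min _ _ Hd1 Hd2) Hab) as [P HP].
  specialize (H1 P (fine_part_min_l _ _ _ _ _ HP)).
  specialize (H2 P (fine_part_min_r _ _ _ _ _ HP)).
  assert (Rabs (I - J) <= Rabs (rsum g a P - J) + Rabs (rsum g a P - I)).
  { replace (I - J) with ((rsum g a P - J) + - (rsum g a P - I)) by ring.
    rewrite <- (Rabs_Ropp (rsum g a P - I)). apply Rabs_triang. }
  unfold e in *; lra.
Qed.

Lemma HKint_ext g h a b I :
  (forall t, a <= t <= b -> g t = h t) -> HKint g a b I -> HKint h a b I.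
Proof.
  intros Hgh HI e He. destruct (HI e He) as [d [Hd H]]. exists d; split; auto.
  intros P HP. rewrite <- (rsum_ext g h d a b P); auto.
Qed.

Lemma HKint_plus g h a b I J :
  HKint g a b I -> HKint h a b J -> HKint (fun t => g t + h t) a b (I + J).
Proof.
  intros HI HJ e He.
  destruct (HI (e/2) ltac:(lra)) as [d1 [Hd1 H1]].
  destruct (HJ (e/2) ltac:(lra)) as [d2 [Hd2 H2]].
  exists (fun t => Rmin (d1 t) (d2 t)); split; [apply gauge_min; auto|].
  intros P HP. rewrite rsum_plus.
  specialize (H1 P (fine_part_min_l _ _ _ _ _ HP)).
  specialize (H2 P (fine_part_min_r _ _ _ _ _ HP)).
  replace (rsum g a P + rsum h a P - (I + J)) with ((rsum g a P - I) + (rsum h a P - J)) by ring.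
  eapply Rle_lt_trans; [apply Rabs_triang|]. lra.
Qed.

Lemma HKint_scal c g a b I : HKint g a b I -> HKint (fun t => c * g t) a b (c * I).
Proof.
  intros HI e He.
  assert (Hc : 0 < Rabs c + 1) by (pose proof (Rabs_pos c); lra).
  destruct (HI (e / (Rabs c + 1))) as [d [Hd H]]; [apply Rdiv_lt_0_compat; auto|].
  exists d; split; auto. intros P HP. rewrite rsum_scal.
  replace (c * rsum g a P - c * I) with (c * (rsum g a P - I)) by ring.
  rewrite Rabs_mult. specialize (H P HP).
  apply Rle_lt_trans with ((Rabs c + 1) * Rabs (rsum g a P - I)).
  - pose proof (Rabs_pos (rsum g a P - I)). nra.
  - apply Rmult_lt_compat_l with (r := Rabs c + 1) in H; auto.
    replace ((Rabs c + 1) * (e / (Rabs c + 1))) with e in H by (field; lra). lra.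
Qed.

Lemma HKint_minus g h a b I J :
  HKint g a b I -> HKint h a b J -> HKint (fun t => g t - h t) a b (I - J).
Proof.
  intros HI HJ. apply (HKint_ext (fun t => g t + (-1) * h t)); [intros; ring|].
  replace (I - J) with (I + (-1) * J) by ring. apply HKint_plus; auto. apply HKint_scal; auto.
Qed.

Lemma HKint_const c a b : a <= b -> HKint (fun _ => c) a b (c * (b - a)).
Proof.
  intros Hab e He. exists (fun _ => 1); split; [intros; lra|].
  intros P HP. rewrite (rsum_const c _ a b P HP), Rminus_diag, Rabs_R0; auto.
Qed.

Lemma HKint_zero a b : HKint (fun _ => 0) a b 0.
Proof.
  intros e He. exists (fun _ => 1); split; [intros; lra|].
  intros P _. replace (rsum (fun _ => 0) a P) with 0; [rewrite Rminus_diag, Rabs_R0; auto|].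
  revert a; induction P as [|[t x] P IH]; simpl; intros; auto. rewrite <- IH; ring.
Qed.

Lemma HKint_degenerate g a : HKint g a a 0.
Proof.
  intros e He. exists (fun _ => 1); split; [intros; lra|].
  intros [|[t x] P] HP; simpl in *; [rewrite Rminus_diag, Rabs_R0; auto|].
  destruct HP as (?&?&?&?). pose proof (fine_part_le _ _ _ _ H2). lra.
Qed.

Lemma HKint_le g h a b I J : a <= b ->
  (forall t, a <= t <= b -> g t <= h t) -> HKint g a b I -> HKint h a b J -> I <= J.
Proof.
  intros Hab Hgh HI HJ. apply Rnot_lt_le; intro HIJ.
  set (e := (I - J) / 2).
  destruct (HI e ltac:(unfold e; lra)) as [d1 [Hd1 H1]].
  destruct (HJ e ltac:(unfold e; lra)) as [d2 [Hd2 H2]].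
  destruct (cousin _ a b (gauge_min _ _ Hd1 Hd2) Hab) as [P HP].
  specialize (H1 P (fine_part_min_l _ _ _ _ _ HP)).
  specialize (H2 P (fine_part_min_r _ _ _ _ _ HP)).
  pose proof (rsum_le g h _ a b P Hgh HP).
  apply Rabs_def2 in H1. apply Rabs_def2 in H2. unfold e in *; lra.
Qed.

Lemma HKint_bound g a b I M : a <= b ->
  (forall t, a <= t <= b -> Rabs (g t) <= M) -> HKint g a b I -> Rabs I <= M * (b - a).
Proof.
  intros Hab Hg HI. apply Rabs_le_between.
  replace (- (M * (b - a))) with (- M * (b - a)) by ring.
  split; [apply (HKint_le (fun _ => - M) g a b) | apply (HKint_le g (fun _ => M) a b)];
    auto; try (apply HKint_const; auto);
    intros t Ht; specialize (Hg t Ht); apply Rabs_le_between in Hg; lra.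
Qed.

Lemma HKint_chasles g a u v A B : a <= u -> u <= v ->
  HKint g a u A -> HKint g a v B -> HKint g u v (B - A).
Proof.
  intros Hau Huv HA HB e He.
  destruct (HA (e/2) ltac:(lra)) as [d1 [Hd1 H1]].
  destruct (HB (e/2) ltac:(lra)) as [d2 [Hd2 H2]].
  exists (fun t => Rmin (d1 t) (d2 t)); split; [apply gauge_min; auto|].
  intros P HP.
  destruct (cousin _ a u (gauge_min _ _ Hd1 Hd2) Hau) as [Q HQ].
  pose proof (fine_part_app _ _ _ _ _ _ HQ HP) as HQP.
  specialize (H2 _ (fine_part_min_r _ _ _ _ _ HQP)).
  specialize (H1 _ (fine_part_min_l _ _ _ _ _ HQ)).
  rewrite (rsum_app g _ a u Q P HQ) in H2.
  apply Rabs_def2 in H1. apply Rabs_def2 in H2. apply Rabs_def1; lra.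
Qed.

Fixpoint defect (g G : R -> R) (a : R) (P : list (R * R)) : R :=
  match P with
  | nil => 0
  | (t, x) :: P' => Rabs (g t * (x - a) - (G x - G a)) + defect g G x P'
  end.

Fixpoint sel_defect (sel : R -> R -> R -> bool) (g G : R -> R) (a : R) (P : list (R * R)) : R :=
  match P with
  | nil => 0
  | (t, x) :: P' =>
      (if sel a t x then g t * (x - a) - (G x - G a) else 0) + sel_defect sel g G x P'
  end.

Lemma rsum_defect g G d a b P : fine_part d a b P ->
  Rabs (rsum g a P - (G b - G a)) <= defect g G a P.
Proof.
  revert a; induction P as [|[t x] P IH]; simpl; intros a HP.
  - subst b. replace (0 - (G a - G a)) with 0 by ring. rewrite Rabs_R0; lra.
  - destruct HP as (?&?&?&?). specialize (IH x H2).
    replace (g t * (x - a) + rsum g x P - (G b - G a)) with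
      ((g t * (x - a) - (G x - G a)) + (rsum g x P - (G b - G x))) by ring.
    eapply Rle_trans; [apply Rabs_triang|]. lra.
Qed.

(* The unselected intervals of [P] are replaced by fine partitions whose Riemann sums
   are close to the increments of [G]. *)
Lemma refine_unselected sel g G a0 b d :
  (forall u v, a0 <= u -> u <= v -> v <= b -> HKint g u v (G v - G u)) ->
  (forall t, 0 < d t) ->
  forall P a, a0 <= a -> fine_part d a b P -> forall eta, 0 < eta ->
  exists P', fine_part d a b P' /\
     Rabs (rsum g a P' - (G b - G a) - sel_defect sel g G a P) <= eta.
Proof.
  intros Hsub Hd P. induction P as [|[t x] P IH]; simpl; intros a Ha HP eta Heta.
  - subst. exists nil; simpl. split; auto.
    replace (0 - (G b - G b) - 0) with 0 by ring. rewrite Rabs_R0; lra.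
  - destruct HP as (H1 & H2 & H3 & H4).
    pose proof (fine_part_le _ _ _ _ H4) as Hxb.
    destruct (IH x ltac:(lra) H4 (eta/2) ltac:(lra)) as [P0 [HP0 HP0']].
    destruct (sel a t x).
    + exists ((t,x)::P0). split; [simpl; repeat split; auto; lra|].
      simpl. replace (g t * (x - a) + rsum g x P0 - (G b - G a)
                      - (g t * (x - a) - (G x - G a) + sel_defect sel g G x P))
        with (rsum g x P0 - (G b - G x) - sel_defect sel g G x P) by ring.
      lra.
    + destruct (Hsub a x ltac:(lra) ltac:(lra) ltac:(lra) (eta/2) ltac:(lra)) as [d' [Hd' Hq]].
      destruct (cousin _ a x (gauge_min _ _ Hd Hd') ltac:(lra)) as [Q HQ].
      exists (Q ++ P0). split.
      * apply fine_part_app with x; auto. apply (fine_part_min_l _ _ _ _ _ HQ).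
      * rewrite (rsum_app g _ a x Q P0 (fine_part_min_l _ _ _ _ _ HQ)).
        specialize (Hq Q (fine_part_min_r _ _ _ _ _ HQ)).
        replace (rsum g a Q + rsum g x P0 - (G b - G a) - (0 + sel_defect sel g G x P))
          with ((rsum g a Q - (G x - G a)) + (rsum g x P0 - (G b - G x) - sel_defect sel g G x P))
          by ring.
        eapply Rle_trans; [apply Rabs_triang|]. lra.
Qed.

Lemma defect_split g G a d b P : fine_part d a b P ->
  defect g G a P =
  sel_defect (fun a t x => if Rle_dec 0 (g t * (x - a) - (G x - G a)) then true else false) g G a P
  - sel_defect (fun a t x => if Rle_dec 0 (g t * (x - a) - (G x - G a)) then false else true) g G a P.
Proof.
  revert a; induction P as [|[t x] P IH]; simpl; intros a HP; [ring|].
  destruct HP as (?&?&?&?). rewrite (IH x); auto.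
  destruct (Rle_dec 0 (g t * (x - a) - (G x - G a))).
  - rewrite Rabs_right by lra. ring.
  - rewrite Rabs_left by lra. ring.
Qed.

(* Saks-Henstock: split the defect into its positive and negative parts; each one is
   a partial Riemann sum, which [refine_unselected] compares with a full one. *)
Theorem saks_henstock g G a b :
  a <= b ->
  (forall u v, a <= u -> u <= v -> v <= b -> HKint g u v (G v - G u)) ->
  forall e, 0 < e -> exists d, (forall t, 0 < d t) /\
    forall P, fine_part d a b P -> defect g G a P <= e.
Proof.
  intros Hab Hsub e He.
  destruct (Hsub a b ltac:(lra) Hab ltac:(lra) (e/4) ltac:(lra)) as [d [Hd H]].
  exists d; split; auto. intros P HP.
  assert (Hsel : forall sel, Rabs (sel_defect sel g G a P) <= e/4).
  { intros sel. apply Rle_plus_epsilon. intros eta Heta.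
    destruct (refine_unselected sel g G a b d Hsub Hd P a ltac:(lra) HP eta Heta)
      as [P' [HP' HH]].
    specialize (H P' HP').
    replace (sel_defect sel g G a P) with
      ((rsum g a P' - (G b - G a)) + - (rsum g a P' - (G b - G a) - sel_defect sel g G a P))
      by ring.
    eapply Rle_trans; [apply Rabs_triang|]. rewrite Rabs_Ropp. lra. }
  rewrite (defect_split g G a d b P HP).
  match goal with |- sel_defect ?s1 _ _ _ _ - sel_defect ?s2 _ _ _ _ <= _ =>
    pose proof (Hsel s1) as H1; pose proof (Hsel s2) as H2 end.
  apply Rabs_le_between in H1. apply Rabs_le_between in H2. lra.
Qed.

(** * Null functions *)

Fixpoint abs_rsum (d : R -> R) (a : R) (P : list (R * R)) : R :=
  match P with
  | nil => 0
  | (t, x) :: P' => Rabs (d t) * (x - a) + abs_rsum d x P'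
  end.

Definition null_on (d : R -> R) (a b : R) : Prop :=
  forall e, 0 < e -> exists delta, (forall t, 0 < delta t) /\
    forall P, fine_part delta a b P -> abs_rsum d a P <= e.

Lemma abs_rsum_le_rsum d dl a b P : fine_part dl a b P -> Rabs (rsum d a P) <= abs_rsum d a P.
Proof.
  revert a; induction P as [|[t x] P IH]; simpl; intros a HP; [rewrite Rabs_R0; lra|].
  destruct HP as (?&?&?&?). specialize (IH x H2).
  eapply Rle_trans; [apply Rabs_triang|]. rewrite Rabs_mult, (Rabs_right (x - a)) by lra. lra.
Qed.

Lemma null_of_HKint_zero d a b : a <= b ->
  (forall u v, a <= u -> u <= v -> v <= b -> HKint d u v 0) -> null_on d a b.
Proof.
  intros Hab H e He.
  destruct (saks_henstock d (fun _ => 0) a b Hab) with (e := e) as [dl [Hdl HH]]; auto.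
  { intros. rewrite Rminus_diag. auto. }
  exists dl; split; auto. intros P HP. specialize (HH P HP).
  replace (abs_rsum d a P) with (defect d (fun _ => 0) a P); auto.
  clear HH. revert a HP Hab H. induction P as [|[t x] P IH]; simpl; intros a HP Hab H; auto.
  destruct HP as (?&?&?&HP). pose proof (fine_part_le _ _ _ _ HP).
  rewrite (IH x); auto; [|intros; apply H; lra].
  rewrite Rminus_diag, Rminus_0_r, Rabs_mult, (Rabs_right (x - a)) by lra. reflexivity.
Qed.

Lemma null_le d h C a b : 0 <= C -> null_on d a b ->
  (forall t, a <= t <= b -> Rabs (h t) <= C * Rabs (d t)) -> null_on h a b.
Proof.
  intros HC Hd Hh e He.
  destruct (Hd (e / (C + 1))) as [dl [Hdl H]]; [apply Rdiv_lt_0_compat; lra|].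
  exists dl; split; auto. intros P HP. specialize (H P HP).
  assert (Hcomp : abs_rsum h a P <= C * abs_rsum d a P).
  { clear H Hd. revert a HP Hh. induction P as [|[t x] P IH]; simpl; intros a HP Hh; [lra|].
    destruct HP as (?&?&?&?). pose proof (fine_part_le _ _ _ _ H2).
    assert (Rabs (h t) * (x - a) <= C * Rabs (d t) * (x - a)).
    { apply Rmult_le_compat_r; [lra|]. apply Hh; lra. }
    assert (abs_rsum h x P <= C * abs_rsum d x P) by (apply IH; auto; intros; apply Hh; lra).
    nra. }
  assert (C * abs_rsum d a P <= C * (e / (C + 1))) by (apply Rmult_le_compat_l; lra).
  pose proof (mul_div_succ_lt C e HC He). lra.
Qed.

Lemma null_add d1 d2 a b : null_on d1 a b -> null_on d2 a b ->
  null_on (fun t => Rabs (d1 t) + Rabs (d2 t)) a b.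
Proof.
  intros H1 H2 e He.
  destruct (H1 (e/2) ltac:(lra)) as [dl1 [Hd1 K1]].
  destruct (H2 (e/2) ltac:(lra)) as [dl2 [Hd2 K2]].
  exists (fun t => Rmin (dl1 t) (dl2 t)); split; [apply gauge_min; auto|].
  intros P HP.
  specialize (K1 P (fine_part_min_l _ _ _ _ _ HP)).
  specialize (K2 P (fine_part_min_r _ _ _ _ _ HP)).
  enough (abs_rsum (fun t => Rabs (d1 t) + Rabs (d2 t)) a P = abs_rsum d1 a P + abs_rsum d2 a P)
    by lra.
  clear K1 K2 H1 H2. revert a HP. induction P as [|[t x] P IH]; simpl; intros a HP; [ring|].
  destruct HP as (?&?&?&?). rewrite (IH x); auto.
  rewrite (Rabs_right (Rabs (d1 t) + Rabs (d2 t))); [ring|].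
  pose proof (Rabs_pos (d1 t)); pose proof (Rabs_pos (d2 t)); lra.
Qed.

Lemma HKint_null d a b : null_on d a b -> HKint d a b 0.
Proof.
  intros H e He. destruct (H (e/2) ltac:(lra)) as [dl [Hdl K]]. exists dl; split; auto.
  intros P HP. specialize (K P HP). rewrite Rminus_0_r.
  pose proof (abs_rsum_le_rsum d _ _ _ _ HP). lra.
Qed.

Lemma HKint_zero_sub d a b : (forall t, a <= t <= b -> HKint d a t 0) ->
  forall u v, a <= u -> u <= v -> v <= b -> HKint d u v 0.
Proof.
  intros H u v Hu Huv Hv. replace 0 with (0 - 0) by ring.
  apply HKint_chasles with a; auto; apply H; lra.
Qed.

(** * Fundamental theorem of calculus and integration by parts *)

Lemma defect_compare h G g F c1 c2 d a b P : 0 <= c1 ->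
  fine_part d a b P ->
  (forall a' t x, a <= a' -> a' <= t -> t <= x -> x <= b -> x - a' < d t ->
     Rabs (h t * (x - a') - (G x - G a'))
     <= c1 * Rabs (g t * (x - a') - (F x - F a')) + c2 * (x - a')) ->
  defect h G a P <= c1 * defect g F a P + c2 * (b - a).
Proof.
  intros Hc1. revert a; induction P as [|[t x] P IH]; simpl; intros a HP Hc.
  - subst b. lra.
  - destruct HP as (?&?&?&?). pose proof (fine_part_le _ _ _ _ H2).
    assert (defect h G x P <= c1 * defect g F x P + c2 * (b - x)).
    { apply IH; auto. intros; apply Hc; lra. }
    specialize (Hc a t x ltac:(lra) ltac:(lra) ltac:(lra) ltac:(lra) H1). nra.
Qed.

Lemma derivable_gauge F f a b eta : 0 < eta ->
  (forall t, a <= t <= b -> derivable_pt_lim F t (f t)) ->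
  exists dl : R -> R, (forall t, 0 < dl t) /\
   forall t, a <= t <= b -> forall y, Rabs (y - t) < dl t ->
     Rabs (F y - F t - f t * (y - t)) <= eta * Rabs (y - t).
Proof.
  intros Heta HF.
  assert (Hex : forall t, exists d, 0 < d /\ (a <= t <= b -> forall y, Rabs (y - t) < d ->
     Rabs (F y - F t - f t * (y - t)) <= eta * Rabs (y - t))).
  { intros t. destruct (classic (a <= t <= b)) as [Ht|Ht].
    - destruct (HF t Ht eta Heta) as [[del Hdel] Hd]. exists del; split; auto.
      intros _ y Hy. destruct (Req_dec y t) as [->|Hyt].
      + rewrite !Rminus_diag, Rmult_0_r, Rminus_0_r, Rabs_R0; lra.
      + specialize (Hd (y - t) ltac:(lra) Hy). simpl in Hd.
        replace (t + (y - t)) with y in Hd by ring.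
        replace (F y - F t - f t * (y - t)) with (((F y - F t) / (y - t) - f t) * (y - t))
          by (field; lra).
        rewrite Rabs_mult. apply Rmult_le_compat_r; [apply Rabs_pos | lra].
    - exists 1; split; [lra | intros; contradiction]. }
  exists (fun t => proj1_sig (constructive_indefinite_description _ (Hex t))).
  split; intros t; destruct (constructive_indefinite_description _ (Hex t)) as [d [Hd1 Hd2]];
    simpl; auto.
Qed.

Theorem HKint_FTC F f a b : a <= b -> (forall t, a <= t <= b -> derivable_pt_lim F t (f t)) ->
  HKint f a b (F b - F a).
Proof.
  intros Hab HF e He.
  set (e' := e / 2 / (b - a + 1)).
  assert (He' : 0 < e') by (unfold e'; apply Rdiv_lt_0_compat; lra).
  destruct (derivable_gauge F f a b e' He' HF) as [dl [Hdl Hg]].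
  exists dl; split; auto. intros P HP.
  eapply Rle_lt_trans; [apply (rsum_defect f F dl a b P HP)|].
  eapply Rle_lt_trans; [apply (defect_compare f F f F 0 e' dl a b P (Rle_refl 0) HP)|].
  - intros a' t x H1 H2 H3 H4 H5.
    assert (K1 := Hg t ltac:(lra) x ltac:(rewrite Rabs_right; lra)).
    assert (K2 := Hg t ltac:(lra) a' ltac:(rewrite Rabs_left1; lra)).
    rewrite (Rabs_right (x - t)) in K1 by lra. rewrite (Rabs_left1 (a' - t)) in K2 by lra.
    replace (f t * (x - a') - (F x - F a')) with
      (- (F x - F t - f t * (x - t)) + (F a' - F t - f t * (a' - t))) by ring.
    eapply Rle_trans; [apply Rabs_triang|]. rewrite Rabs_Ropp.
    pose proof (Rabs_pos (f t * (x - a') - (F x - F a'))). lra.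
  - pose proof (mul_div_succ_lt (b - a) (e / 2) ltac:(lra) ltac:(lra)).
    rewrite Rmult_0_l, Rplus_0_l, Rmult_comm. unfold e'. lra.
Qed.

Lemma derivable_bounded w w' a b : a <= b ->
  (forall t, a <= t <= b -> derivable_pt_lim w t (w' t)) ->
  exists W, 0 <= W /\ forall t, a <= t <= b -> Rabs (w t) <= W.
Proof.
  intros Hab Hw.
  destruct (continuity_ab_maj (fun t => Rabs (w t)) a b Hab) as [m [Hm1 Hm2]].
  - intros c Hc. apply (continuity_pt_comp w Rabs); [|apply Rcontinuity_abs].
    apply (derivable_continuous_pt w c (exist _ (w' c) (Hw c Hc))).
  - exists (Rabs (w m)); split; [apply Rabs_pos | auto].
Qed.

Section ByParts.

Variables (u U w w' : R -> R) (a b M : R).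
Hypothesis Hab : a <= b.
Hypothesis Hu : forall t, a <= t <= b -> Rabs (u t) <= M.
Hypothesis HU : forall x y, a <= x -> x <= y -> y <= b -> HKint u x y (U y - U x).
Hypothesis Hw : forall t, a <= t <= b -> derivable_pt_lim w t (w' t).

Lemma primitive_lip x y : a <= x -> x <= y -> y <= b -> Rabs (U y - U x) <= M * (y - x).
Proof. intros. apply (HKint_bound u x y); auto. intros; apply Hu; lra. Qed.

Lemma primitive_bounded : exists UB, 0 <= UB /\ forall t, a <= t <= b -> Rabs (U t) <= UB.
Proof.
  exists (Rabs (U a) + Rabs M * (b - a)). split; [pose proof (Rabs_pos (U a)); pose proof (Rabs_pos M); nra|].
  intros t Ht. pose proof (primitive_lip a t ltac:(lra) ltac:(lra) ltac:(lra)).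
  replace (U t) with (U a + (U t - U a)) by ring.
  eapply Rle_trans; [apply Rabs_triang|].
  assert (M * (t - a) <= Rabs M * (b - a)).
  { apply Rmult_le_compat; try lra; [|apply Rle_abs]. pose proof (Hu a ltac:(lra)).
    pose proof (Rabs_pos (u a)); lra. }
  lra.
Qed.

(* The product defect on [a', x] with tag t splits as
   w t (u t (x-a') - (U x - U a')) - (U x - U t)(w x - w t) + (U a' - U t)(w a' - w t)
   - U t ((w x - w t - w' t (x - t)) - (w a' - w t - w' t (a' - t))). *)
Lemma by_parts_local W UB eta c a' t x :
  a <= a' -> a' <= t -> t <= x -> x <= b -> 0 <= eta <= 1 ->
  Rabs (w t) <= W -> Rabs (U t) <= UB ->
  Rabs (w x - w t - w' t * (x - t)) <= eta * (x - t) ->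
  Rabs (w a' - w t - w' t * (a' - t)) <= eta * (t - a') ->
  (x - a') * ((M + 1) * (Rabs (w' t) + 1)) <= c ->
  Rabs ((u t * w t + U t * w' t) * (x - a') - (U x * w x - U a' * w a'))
  <= W * Rabs (u t * (x - a') - (U x - U a')) + (c + UB * eta) * (x - a').
Proof.
  intros H1 H2 H3 H4 Heta Wt Ut K1 K2 Hc.
  assert (L1 := primitive_lip t x ltac:(lra) ltac:(lra) ltac:(lra)).
  assert (L2 := primitive_lip a' t ltac:(lra) ltac:(lra) ltac:(lra)).
  assert (HM : 0 <= M) by (pose proof (Hu t ltac:(lra)); pose proof (Rabs_pos (u t)); lra).
  pose proof (Rabs_pos (w' t)) as Hw'.
  set (A1 := u t * (x - a') - (U x - U a')) in *.
  set (B1 := w x - w t - w' t * (x - t)) in *.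
  set (B2 := w a' - w t - w' t * (a' - t)) in *.
  replace ((u t * w t + U t * w' t) * (x - a') - (U x * w x - U a' * w a')) with
    (w t * A1 - (U x - U t) * (w x - w t) + (U a' - U t) * (w a' - w t) - U t * (B1 - B2))
    by (unfold A1, B1, B2; ring).
  assert (Hwx : Rabs (w x - w t) <= (Rabs (w' t) + 1) * (x - t)).
  { replace (w x - w t) with (B1 + w' t * (x - t)) by (unfold B1; ring).
    eapply Rle_trans; [apply Rabs_triang|]. rewrite Rabs_mult, (Rabs_right (x - t)) by lra. nra. }
  assert (Hwa : Rabs (w a' - w t) <= (Rabs (w' t) + 1) * (t - a')).
  { replace (w a' - w t) with (B2 + w' t * (a' - t)) by (unfold B2; ring).
    eapply Rle_trans; [apply Rabs_triang|]. rewrite Rabs_mult, (Rabs_left1 (a' - t)) by lra. nra. }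
  assert (Hsmall : M * (x - a') * (Rabs (w' t) + 1) <= c) by nra.
  assert (P1 : Rabs ((U x - U t) * (w x - w t)) <= c * (x - t)).
  { rewrite Rabs_mult.
    apply Rle_trans with ((M * (x - a')) * ((Rabs (w' t) + 1) * (x - t))); [|nra].
    apply Rmult_le_compat; try apply Rabs_pos; auto. nra. }
  assert (P2 : Rabs ((U a' - U t) * (w a' - w t)) <= c * (t - a')).
  { rewrite Rabs_mult. replace (U a' - U t) with (- (U t - U a')) by ring. rewrite Rabs_Ropp.
    apply Rle_trans with ((M * (x - a')) * ((Rabs (w' t) + 1) * (t - a'))); [|nra].
    apply Rmult_le_compat; try apply Rabs_pos; auto. nra. }
  assert (P3 : Rabs (U t * (B1 - B2)) <= UB * eta * (x - a')).
  { rewrite Rabs_mult. apply Rle_trans with (UB * (eta * (x - t) + eta * (t - a'))); [|nra].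
    apply Rmult_le_compat; try apply Rabs_pos; auto.
    unfold Rminus at 1. eapply Rle_trans; [apply Rabs_triang|]. rewrite Rabs_Ropp. lra. }
  assert (P4 : Rabs (w t * A1) <= W * Rabs A1)
    by (rewrite Rabs_mult; apply Rmult_le_compat_r; [apply Rabs_pos | auto]).
  unfold Rminus at 1 2. eapply Rle_trans; [apply Rabs_triang|].
  eapply Rle_trans; [apply Rplus_le_compat_r; apply Rabs_triang|].
  eapply Rle_trans; [apply Rplus_le_compat_r, Rplus_le_compat_r; apply Rabs_triang|].
  rewrite !Rabs_Ropp. lra.
Qed.

(* Saks-Henstock controls the defect of [U]; the derivative of [w] controls the rest. *)
Theorem HKint_by_parts :
  HKint (fun t => u t * w t + U t * w' t) a b (U b * w b - U a * w a).
Proof.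
  intros e He.
  destruct (derivable_bounded w w' a b Hab Hw) as [W [HW0 HW]].
  destruct primitive_bounded as [UB [HUB0 HUB]].
  assert (HM0 : 0 <= M) by (pose proof (Hu a ltac:(lra)); pose proof (Rabs_pos (u a)); lra).
  set (e1 := e / 2 / (W + 1)).
  assert (He1 : 0 < e1) by (unfold e1; apply Rdiv_lt_0_compat; lra).
  set (e2 := e / 4 / (b - a + 1)).
  assert (He2 : 0 < e2) by (unfold e2; apply Rdiv_lt_0_compat; lra).
  destruct (saks_henstock u U a b Hab HU e1 He1) as [d1 [Hd1 HSH]].
  set (eta := Rmin 1 (e2 / 2 / (UB + 1))).
  assert (Heta : 0 < eta) by (unfold eta; apply Rmin_glb_lt; [lra|apply Rdiv_lt_0_compat; lra]).
  assert (Heta1 : eta <= 1) by apply Rmin_l.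
  assert (Heta2 : UB * eta <= e2 / 2).
  { pose proof (mul_div_succ_lt UB (e2 / 2) HUB0 ltac:(lra)).
    assert (UB * eta <= UB * (e2 / 2 / (UB + 1))) by (apply Rmult_le_compat_l; [lra | apply Rmin_r]).
    lra. }
  destruct (derivable_gauge w w' a b eta Heta Hw) as [d2 [Hd2 Hg]].
  set (d3 := fun t => e2 / 2 / ((M + 1) * (Rabs (w' t) + 1))).
  assert (Hd3 : forall t, 0 < d3 t).
  { intros t; unfold d3. pose proof (Rabs_pos (w' t)).
    apply Rdiv_lt_0_compat; [lra|]. apply Rmult_lt_0_compat; lra. }
  exists (fun t => Rmin (d1 t) (Rmin (d2 t) (d3 t))).
  split; [intros; repeat apply Rmin_glb_lt; auto|].
  intros P HP.
  eapply Rle_lt_trans; [apply (rsum_defect _ (fun t => U t * w t) _ a b P HP)|].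
  eapply Rle_lt_trans; [apply (defect_compare _ (fun t => U t * w t) u U W e2 _ a b P HW0 HP)|].
  - intros a' t x H1 H2 H3 H4 H5.
    pose proof (Rmin_l (d1 t) (Rmin (d2 t) (d3 t))).
    pose proof (Rmin_l (d2 t) (d3 t)). pose proof (Rmin_r (d2 t) (d3 t)).
    pose proof (Rmin_r (d1 t) (Rmin (d2 t) (d3 t))).
    assert (K1 := Hg t ltac:(lra) x ltac:(rewrite Rabs_right; lra)).
    assert (K2 := Hg t ltac:(lra) a' ltac:(rewrite Rabs_left1; lra)).
    rewrite (Rabs_right (x - t)) in K1 by lra. rewrite (Rabs_left1 (a' - t)) in K2 by lra.
    assert (Hc : (x - a') * ((M + 1) * (Rabs (w' t) + 1)) < e2 / 2).
    { pose proof (Rabs_pos (w' t)). apply Rlt_div_r; [nra | unfold d3 in *; lra]. }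
    eapply Rle_trans.
    + apply (by_parts_local W UB eta (e2 / 2)); auto; try lra; [apply HW | apply HUB]; lra.
    + assert ((e2 / 2 + UB * eta) * (x - a') <= e2 * (x - a')) by (apply Rmult_le_compat_r; lra).
      simpl. lra.
  - assert (W * defect u U a P <= W * e1).
    { apply Rmult_le_compat_l; auto. apply HSH. eapply fine_part_mono; [|apply HP].
      intros; apply Rmin_l. }
    pose proof (mul_div_succ_lt W (e / 2) HW0 ltac:(lra)).
    pose proof (mul_div_succ_lt (b - a) (e / 4) ltac:(lra) ltac:(lra)).
    rewrite (Rmult_comm e2). unfold e1, e2 in *. lra.
Qed.

End ByParts.

(** * Integrability of functions of controlled oscillation *)

Fixpoint ispart (a b : R) (P : list (R * R)) : Prop :=
  match P with nil => a = b | (t, x) :: P' => a < x /\ ispart x b P' end.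

Lemma ispart_le a b P : ispart a b P -> a <= b.
Proof.
  revert a; induction P as [|[t x] P IH]; simpl; intros a H; [lra|].
  destruct H. specialize (IH _ H0). lra.
Qed.

Lemma fine_ispart d a b P : fine_part d a b P -> ispart a b P.
Proof.
  revert a; induction P as [|[t x] P IH]; simpl; intros a H; auto.
  destruct H as (?&?&?&?). split; auto.
Qed.

Section Oscillation.

Variables (h Phi : R -> R) (a0 b0 : R).
Hypothesis Hmono : forall x y, a0 <= x -> x <= y -> y <= b0 -> Phi x <= Phi y.
Hypothesis Hosc : forall x s t y, a0 <= x -> x <= s -> s <= y -> x <= t -> t <= y -> y <= b0 ->
  Rabs (h s - h t) <= Phi y - Phi x.

Fixpoint lower_sum (a : R) (P : list (R * R)) : R :=
  match P with
  | nil => 0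
  | (t, x) :: P' => (h a - (Phi x - Phi a)) * (x - a) + lower_sum x P'
  end.

Fixpoint upper_sum (a : R) (P : list (R * R)) : R :=
  match P with
  | nil => 0
  | (t, x) :: P' => (h a + (Phi x - Phi a)) * (x - a) + upper_sum x P'
  end.

Lemma rsum_between d a P : a0 <= a -> fine_part d a b0 P ->
  lower_sum a P <= rsum h a P <= upper_sum a P.
Proof.
  revert a; induction P as [|[t x] P IH]; simpl; intros a Ha HP; [lra|].
  destruct HP as (?&?&?&?). pose proof (fine_part_le _ _ _ _ H2).
  specialize (IH x ltac:(lra) H2).
  assert (K := Hosc a t a x ltac:(lra) ltac:(lra) ltac:(lra) ltac:(lra) ltac:(lra) ltac:(lra)).
  apply Rabs_le_between in K. split; nra.
Qed.

Lemma upper_lower_gap c a P : a0 <= a -> fine_part (fun _ => c) a b0 P ->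
  upper_sum a P - lower_sum a P <= 2 * c * (Phi b0 - Phi a).
Proof.
  revert a; induction P as [|[t x] P IH]; simpl; intros a Ha HP.
  - subst; lra.
  - destruct HP as (?&?&?&?). pose proof (fine_part_le _ _ _ _ H2).
    specialize (IH x ltac:(lra) H2).
    assert (Phi a <= Phi x) by (apply Hmono; lra).
    assert ((Phi x - Phi a) * (x - a) <= (Phi x - Phi a) * c) by (apply Rmult_le_compat_l; lra).
    nra.
Qed.

(* Any lower sum is below any upper sum: induction on the total number of intervals,
   peeling off the shorter of the two first intervals. *)
Lemma lower_le_upper : forall N P Q a, (length P + length Q <= N)%nat -> a0 <= a ->
  ispart a b0 P -> ispart a b0 Q -> lower_sum a P <= upper_sum a Q.
Proof.
  induction N as [|N IH]; intros P Q a HN Ha HP HQ.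
  - destruct P; destruct Q; simpl in HN; try lia. simpl; lra.
  - destruct P as [|[t x] P']; destruct Q as [|[s y] Q'].
    + simpl; lra.
    + simpl in HP, HQ. destruct HQ as [HQ1 HQ2]. pose proof (ispart_le _ _ _ HQ2). lra.
    + simpl in HP, HQ. destruct HP as [HP1 HP2]. pose proof (ispart_le _ _ _ HP2). lra.
    + simpl in HP, HQ, HN. destruct HP as [HP1 HP2]. destruct HQ as [HQ1 HQ2].
      pose proof (ispart_le _ _ _ HP2). pose proof (ispart_le _ _ _ HQ2).
      destruct (Rle_lt_dec x y) as [Hxy|Hxy].
      * destruct (Req_dec x y) as [<-|Hxy'].
        -- simpl. assert (lower_sum x P' <= upper_sum x Q') by (apply IH; auto; [lia | lra]).
           assert (Phi a <= Phi x) by (apply Hmono; lra). nra.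
        -- assert (lower_sum x P' <= upper_sum x ((s,y)::Q')).
           { apply IH; auto; [simpl; lia | lra | simpl; split; auto; lra]. }
           simpl in *.
           assert (Phi a <= Phi x) by (apply Hmono; lra).
           assert (Phi x <= Phi y) by (apply Hmono; lra).
           assert (K := Hosc a x a x ltac:(lra) ltac:(lra) ltac:(lra) ltac:(lra) ltac:(lra) ltac:(lra)).
           apply Rabs_le_between in K. nra.
      * assert (lower_sum y ((t,x)::P') <= upper_sum y Q').
        { apply IH; auto; [simpl; lia | lra | simpl; split; auto; lra]. }
        simpl in *.
        assert (Phi a <= Phi y) by (apply Hmono; lra).
        assert (Phi y <= Phi x) by (apply Hmono; lra).
        assert (K := Hosc a y a y ltac:(lra) ltac:(lra) ltac:(lra) ltac:(lra) ltac:(lra) ltac:(lra)).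
        apply Rabs_le_between in K. nra.
Qed.

Lemma rsum_uniform_close c1 c2 P Q : 0 < c1 -> 0 < c2 ->
  fine_part (fun _ => c1) a0 b0 P -> fine_part (fun _ => c2) a0 b0 Q ->
  rsum h a0 P - rsum h a0 Q <= 2 * (c1 + c2) * (Phi b0 - Phi a0).
Proof.
  intros Hc1 Hc2 HP HQ.
  pose proof (rsum_between _ a0 P (Rle_refl _) HP).
  pose proof (rsum_between _ a0 Q (Rle_refl _) HQ).
  pose proof (upper_lower_gap c1 a0 P (Rle_refl _) HP).
  pose proof (upper_lower_gap c2 a0 Q (Rle_refl _) HQ).
  pose proof (lower_le_upper _ P Q a0 (le_n _) (Rle_refl _)
                (fine_ispart _ _ _ _ HP) (fine_ispart _ _ _ _ HQ)).
  lra.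
Qed.

Lemma rsum_uniform_dist c1 c2 P Q : 0 < c1 -> 0 < c2 ->
  fine_part (fun _ => c1) a0 b0 P -> fine_part (fun _ => c2) a0 b0 Q ->
  Rabs (rsum h a0 P - rsum h a0 Q) <= 2 * (c1 + c2) * (Phi b0 - Phi a0).
Proof.
  intros Hc1 Hc2 HP HQ. apply Rabs_le_between.
  pose proof (rsum_uniform_close c1 c2 P Q Hc1 Hc2 HP HQ).
  pose proof (rsum_uniform_close c2 c1 Q P Hc2 Hc1 HQ HP). lra.
Qed.

End Oscillation.

Lemma inv_succ_small e : 0 < e -> exists N : nat, forall n, (N <= n)%nat -> / (INR n + 1) < e.
Proof.
  intros He. destruct (archimed (/ e)) as [H1 H2].
  exists (Z.to_nat (up (/ e))). intros n Hn.
  assert (0 < / e) by (apply Rinv_0_lt_compat; auto).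
  assert (IZR (up (/ e)) <= INR n).
  { apply le_INR in Hn. rewrite INR_IZR_INZ, Z2Nat.id in Hn; auto. apply le_IZR. lra. }
  assert (Hlt : / e < INR n + 1) by lra.
  apply Rinv_lt_contravar in Hlt; [|apply Rmult_lt_0_compat; lra].
  rewrite Rinv_inv in Hlt; auto.
Qed.

(* Riemann sums over uniformly fine partitions form a Cauchy sequence whose limit is the
   integral; a constant gauge suffices. *)
Theorem HKint_exists_osc h Phi a b : a <= b ->
  (forall x y, a <= x -> x <= y -> y <= b -> Phi x <= Phi y) ->
  (forall x s t y, a <= x -> x <= s -> s <= y -> x <= t -> t <= y -> y <= b ->
     Rabs (h s - h t) <= Phi y - Phi x) ->
  exists I, HKint h a b I.
Proof.
  intros Hab Hmono Hosc.
  set (D := Phi b - Phi a).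
  assert (HD : 0 <= D) by (unfold D; assert (Phi a <= Phi b) by (apply Hmono; lra); lra).
  assert (Hpos : forall m, 0 < / (INR m + 1))
    by (intros; apply Rinv_0_lt_compat; pose proof (pos_INR m); lra).
  assert (Hex : forall m : nat, exists P, fine_part (fun _ => / (INR m + 1)) a b P)
    by (intros m; apply cousin; auto).
  set (Pm := fun m => proj1_sig (constructive_indefinite_description _ (Hex m))).
  assert (HPm : forall m, fine_part (fun _ => / (INR m + 1)) a b (Pm m)).
  { intros m. unfold Pm. destruct (constructive_indefinite_description _ (Hex m)); auto. }
  set (s := fun m => rsum h a (Pm m)).
  assert (Hclose : forall c P m, 0 < c -> fine_part (fun _ => c) a b P ->
     Rabs (rsum h a P - s m) <= 2 * (c + / (INR m + 1)) * D)
    by (intros; apply rsum_uniform_dist; auto).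
  assert (Hcauchy : Cauchy_crit s).
  { intros e He. set (x := e / 4 / (D + 1)).
    destruct (inv_succ_small x) as [N HN]; [unfold x; apply Rdiv_lt_0_compat; lra|].
    exists N. intros p m Hp Hm. unfold R_dist.
    specialize (Hclose _ _ m (Hpos p) (HPm p)).
    pose proof (HN p Hp). pose proof (HN m Hm). pose proof (Hpos p). pose proof (Hpos m).
    assert (2 * (/ (INR p + 1) + / (INR m + 1)) * D <= D * (e / (D + 1)))
      by (replace (D * (e / (D + 1))) with (2 * (x + x) * D) by (unfold x; field; lra);
          apply Rmult_le_compat_r; lra).
    pose proof (mul_div_succ_lt D e HD He). fold (s p) in Hclose. lra. }
  destruct (Rcomplete.R_complete s Hcauchy) as [I HI].
  exists I. intros e He.
  set (c := e / 8 / (D + 1)).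
  assert (Hc : 0 < c) by (unfold c; apply Rdiv_lt_0_compat; lra).
  exists (fun _ => c). split; auto. intros P HP.
  destruct (HI (e / 4) ltac:(lra)) as [N1 HN1].
  destruct (inv_succ_small c Hc) as [N2 HN2].
  specialize (HN1 (N1 + N2)%nat ltac:(lia)). specialize (HN2 (N1 + N2)%nat ltac:(lia)).
  specialize (Hclose c P (N1 + N2)%nat Hc HP). unfold R_dist in HN1.
  assert (2 * (c + / (INR (N1 + N2) + 1)) * D <= D * (e / 2 / (D + 1)))
    by (replace (D * (e / 2 / (D + 1))) with (2 * (c + c) * D) by (unfold c; field; lra);
        apply Rmult_le_compat_r; lra).
  pose proof (mul_div_succ_lt D (e / 2) HD ltac:(lra)).
  replace (rsum h a P - I) with ((rsum h a P - s (N1 + N2)%nat) + (s (N1 + N2)%nat - I)) by ring.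
  eapply Rle_lt_trans; [apply Rabs_triang|]. lra.
Qed.

(** * Vectors *)

Definition veq (n : nat) (x y : nat -> R) : Prop := forall i, (i < n)%nat -> x i = y i.

Fixpoint norm1 (n : nat) (x : nat -> R) : R :=
  match n with O => 0 | S m => norm1 m x + Rabs (x m) end.

Lemma veq_S n x y : veq (S n) x y -> veq n x y.
Proof. intros H i Hi. apply H; lia. Qed.

Lemma dot_veq n x x' y y' : veq n x x' -> veq n y y' -> dot n x y = dot n x' y'.
Proof.
  induction n as [|n IH]; simpl; intros H1 H2; auto.
  rewrite IH by (eapply veq_S; eauto). rewrite (H1 n), (H2 n) by lia. auto.
Qed.

Lemma dot_comm n x y : dot n x y = dot n y x.
Proof. induction n; simpl; auto. rewrite IHn; ring. Qed.

Lemma dot_vsub_l n x y z : dot n (vsub x y) z = dot n x z - dot n y z.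
Proof. induction n; simpl; [ring|]. rewrite IHn. unfold vsub; ring. Qed.

Lemma dot_vsub_r n x y z : dot n z (vsub x y) = dot n z x - dot n z y.
Proof. rewrite !(dot_comm n z). apply dot_vsub_l. Qed.

Lemma dot_vscale_l n c x z : dot n (vscale c x) z = c * dot n x z.
Proof. induction n; simpl; [ring|]. rewrite IHn. unfold vscale; ring. Qed.

Lemma dot_vscale_r n c x z : dot n z (vscale c x) = c * dot n z x.
Proof. rewrite !(dot_comm n z). apply dot_vscale_l. Qed.

Lemma dot_plus_l n x y z : dot n (fun i => x i + y i) z = dot n x z + dot n y z.
Proof. induction n; simpl; [ring|]. rewrite IHn. ring. Qed.

Lemma dot_nonneg n x : 0 <= dot n x x.
Proof. induction n; simpl; [lra|]. pose proof (Rle_0_sqr (x n)). unfold Rsqr in H. lra. Qed.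

Lemma dot_self_eq0 n x : dot n x x = 0 -> veq n x (fun _ => 0).
Proof.
  induction n as [|n IH]; simpl; intros H i Hi; [lia|].
  pose proof (dot_nonneg n x). pose proof (Rle_0_sqr (x n)). unfold Rsqr in H1.
  assert (dot n x x = 0) by lra. assert (x n * x n = 0) by lra.
  destruct (Nat.eq_dec i n) as [->|Hin]; [apply Rmult_integral in H3; lra|].
  apply IH; auto; lia.
Qed.

Lemma dot_veq0_l n x y : veq n x (fun _ => 0) -> dot n x y = 0.
Proof.
  intros H. rewrite (dot_veq n x (fun _ => 0) y y); auto; [|intros i _; auto].
  clear. induction n; simpl; auto. rewrite IHn; ring.
Qed.

Lemma dot_basis n x i c : (i < n)%nat -> dot n x (fun j => if Nat.eqb j i then c else 0) = x i * c.
Proof.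
  induction n as [|n IH]; intros Hi; [lia|]. simpl.
  destruct (Nat.eq_dec i n) as [->|Hin].
  - rewrite Nat.eqb_refl, (dot_comm n x), dot_veq0_l; [ring|].
    intros j Hj. destruct (Nat.eqb_spec j n); auto; lia.
  - rewrite IH by lia. destruct (Nat.eqb_spec n i); [lia|]. ring.
Qed.

Lemma cauchy_schwarz n x y : dot n x y * dot n x y <= dot n x x * dot n y y.
Proof.
  destruct (Req_dec (dot n y y) 0) as [H0|H0].
  - rewrite (dot_comm n x y), (dot_veq0_l n y x) by (apply dot_self_eq0; auto). rewrite H0; lra.
  - pose proof (dot_nonneg n y). assert (Hp : 0 < dot n y y) by lra.
    pose proof (dot_nonneg n (vsub x (vscale (dot n x y / dot n y y) y))) as H1.
    rewrite !dot_vsub_l, !dot_vsub_r, !dot_vscale_l, !dot_vscale_r, (dot_comm n y x) in H1.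
    set (A := dot n x x) in *. set (B := dot n x y) in *. set (D := dot n y y) in *.
    replace (A - B / D * B - (B / D * B - B / D * (B / D * D))) with ((A * D - B * B) / D)
      in H1 by (field; auto).
    assert (0 <= A * D - B * B); [|lra].
    apply Rmult_le_reg_r with (/ D); [apply Rinv_0_lt_compat; auto|]. lra.
Qed.

Lemma norm1_nonneg n x : 0 <= norm1 n x.
Proof. induction n; simpl; [lra|]. pose proof (Rabs_pos (x n)); lra. Qed.

Lemma dot_le_norm1 n e : dot n e e <= norm1 n e * norm1 n e.
Proof.
  induction n; simpl; [lra|].
  pose proof (norm1_nonneg n e). pose proof (Rabs_pos (e n)).
  assert (e n * e n = Rabs (e n) * Rabs (e n))
    by (rewrite <- Rabs_mult, Rabs_right; [auto | apply Rle_ge, Rle_0_sqr]).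
  nra.
Qed.

Lemma dot_bound_norm1 n x y Mx : (forall i, (i < n)%nat -> Rabs (x i) <= Mx) ->
  Rabs (dot n x y) <= Mx * norm1 n y.
Proof.
  induction n as [|n IH]; simpl; intros H; [rewrite Rabs_R0; lra|].
  eapply Rle_trans; [apply Rabs_triang|]. rewrite Rabs_mult.
  assert (Rabs (x n) <= Mx) by (apply H; lia).
  assert (Rabs (dot n x y) <= Mx * norm1 n y) by (apply IH; intros; apply H; lia).
  pose proof (Rabs_pos (y n)). nra.
Qed.

Lemma norm1_bound n x M : (forall i, (i < n)%nat -> Rabs (x i) <= M) -> norm1 n x <= INR n * M.
Proof.
  induction n as [|n IH]; intros H; [simpl; lra|].
  change (norm1 (S n) x) with (norm1 n x + Rabs (x n)). rewrite S_INR. assert (Rabs (x n) <= M) by (apply H; lia).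
  assert (norm1 n x <= INR n * M) by (apply IH; intros; apply H; lia). lra.
Qed.

Lemma dot_self_bound n y M : (forall i, (i < n)%nat -> Rabs (y i) <= M) -> 0 <= M ->
  dot n y y <= (INR n * M) * (INR n * M).
Proof.
  intros H HM. eapply Rle_trans; [apply dot_le_norm1|].
  pose proof (norm1_nonneg n y). pose proof (norm1_bound n y M H).
  apply Rmult_le_compat; auto.
Qed.

(** * The projection onto the orthogonal complement of two vectors *)

Lemma remove_comp_veq n u u' x x' : veq n u u' -> veq n x x' ->
  veq n (remove_comp n u x) (remove_comp n u' x').
Proof.
  intros Hu Hx. unfold remove_comp.
  rewrite (dot_veq n u u' u u'), (dot_veq n x x' u u'); auto.
  destruct (Req_EM_T (dot n u' u') 0); auto.
  intros i Hi. unfold vsub, vscale. rewrite Hx, Hu; auto.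
Qed.

Lemma remove_comp_min n u z c :
  dot n (remove_comp n u z) (remove_comp n u z) <=
  dot n (vsub z (vscale c u)) (vsub z (vscale c u)).
Proof.
  unfold remove_comp. destruct (Req_EM_T (dot n u u) 0) as [H0|H0].
  - pose proof (dot_self_eq0 n u H0).
    rewrite !dot_vsub_l, !dot_vsub_r, !dot_vscale_l, !dot_vscale_r, (dot_comm n z u).
    rewrite !(dot_veq0_l n u) by auto. lra.
  - pose proof (dot_nonneg n u). assert (Hp : 0 < dot n u u) by lra.
    rewrite !dot_vsub_l, !dot_vsub_r, !dot_vscale_l, !dot_vscale_r, (dot_comm n u z).
    set (A := dot n z z). set (B := dot n z u). set (D := dot n u u).
    assert (0 <= (c * D - B) * (c * D - B) / D)
      by (apply Rmult_le_pos; [apply Rle_0_sqr | apply Rlt_le, Rinv_0_lt_compat; auto]).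
    replace (A - B / D * B - (B / D * B - B / D * (B / D * D))) with (A - B * B / D)
      by (field; auto).
    replace (A - c * B - (c * B - c * (c * D))) with (A - B * B / D + (c * D - B) * (c * D - B) / D)
      by (field; auto).
    lra.
Qed.

Lemma remove_comp_combo n V x a b y : dot n V V <> 0 ->
  veq n x (fun i => a * V i + b * y i) ->
  veq n (remove_comp n V x) (vscale b (remove_comp n V y)).
Proof.
  intros HV Hx i Hi. unfold remove_comp. destruct (Req_EM_T (dot n V V) 0); [contradiction|].
  unfold vsub, vscale.
  rewrite (dot_veq n x (fun i => a * V i + b * y i) V V); auto; [|intros j _; auto].
  rewrite dot_plus_l. change (fun i => a * V i) with (vscale a V).
  change (fun i => b * y i) with (vscale b y). rewrite !dot_vscale_l, Hx by auto.
  field. auto.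
Qed.

Lemma remove_comp_split n V W v :
  remove_comp n V W = fun i => remove_comp n V v i + remove_comp n V (vsub W v) i.
Proof.
  apply functional_extensionality; intros i. unfold remove_comp.
  destruct (Req_EM_T (dot n V V) 0); [unfold vsub; ring|].
  rewrite dot_vsub_l. unfold vsub, vscale. field. auto.
Qed.

Theorem proj_perp_bound n V W x v a g y : dot n V V <> 0 ->
  veq n x (fun i => a * V i + g * v i) ->
  dot n (proj_perp n V W x) y * dot n (proj_perp n V W x) y <=
  g * g * dot n (vsub W v) (vsub W v) * dot n y y.
Proof.
  intros HV Hx. unfold proj_perp.
  set (Wp := remove_comp n V W). set (vh := remove_comp n V v).
  set (eh := remove_comp n V (vsub W v)).
  set (P := remove_comp n Wp (remove_comp n V x)).
  assert (HP : veq n P (remove_comp n Wp (vscale g vh))).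
  { apply remove_comp_veq; [intros i _; auto|]. apply remove_comp_combo with a; auto. }
  assert (HWp : Wp = fun i => vh i + eh i) by (unfold Wp, vh, eh; apply remove_comp_split).
  assert (H1 : dot n P P <= g * g * dot n eh eh).
  { rewrite (dot_veq n P _ P _ HP HP).
    eapply Rle_trans; [apply (remove_comp_min n Wp (vscale g vh) g)|].
    rewrite (dot_veq n (vsub (vscale g vh) (vscale g Wp)) (vscale (-g) eh) _ (vscale (-g) eh)).
    - rewrite dot_vscale_l, dot_vscale_r. lra.
    - intros i _; unfold vsub, vscale; rewrite HWp; ring.
    - intros i _; unfold vsub, vscale; rewrite HWp; ring. }
  assert (H2 : dot n eh eh <= dot n (vsub W v) (vsub W v)).
  { unfold eh. eapply Rle_trans; [apply (remove_comp_min n V (vsub W v) 0)|].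
    right. apply dot_veq; intros i _; unfold vsub, vscale; ring. }
  pose proof (cauchy_schwarz n P y). pose proof (dot_nonneg n y). pose proof (dot_nonneg n eh).
  pose proof (Rle_0_sqr g). unfold Rsqr in *.
  assert (dot n P P * dot n y y <= g * g * dot n eh eh * dot n y y)
    by (apply Rmult_le_compat_r; auto).
  assert (g * g * dot n eh eh <= g * g * dot n (vsub W v) (vsub W v))
    by (apply Rmult_le_compat_l; auto).
  assert (g * g * dot n eh eh * dot n y y <= g * g * dot n (vsub W v) (vsub W v) * dot n y y)
    by (apply Rmult_le_compat_r; auto).
  lra.
Qed.

Lemma remove_comp_scale n u c x : remove_comp n u (vscale c x) = vscale c (remove_comp n u x).
Proof.
  apply functional_extensionality; intros i. unfold remove_comp.
  destruct (Req_EM_T (dot n u u) 0); [unfold vscale; auto|].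
  rewrite dot_vscale_l. unfold vsub, vscale. field. auto.
Qed.

Lemma proj_perp_scale n V W c x : proj_perp n V W (vscale c x) = vscale c (proj_perp n V W x).
Proof. unfold proj_perp. rewrite !remove_comp_scale. auto. Qed.

Lemma proj_perp_veq0 n V W x : veq n x (fun _ => 0) -> veq n (proj_perp n V W x) (fun _ => 0).
Proof.
  intros Hx. unfold proj_perp.
  assert (Hrc : forall u z, veq n z (fun _ => 0) -> veq n (remove_comp n u z) (fun _ => 0)).
  { intros u z Hz i Hi. unfold remove_comp. destruct (Req_EM_T (dot n u u) 0); [apply Hz; auto|].
    unfold vsub, vscale. rewrite (dot_veq0_l n z u Hz), Hz by auto. field. auto. }
  apply Hrc, Hrc, Hx.
Qed.

(** * Products of a function of bounded variation and a Lipschitz function *)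

Fixpoint chain_end (x0 : R) (l : list R) : R :=
  match l with nil => x0 | y :: l' => chain_end y l' end.

Lemma chain_in_mono b b' x0 l : b <= b' -> chain_in b x0 l -> chain_in b' x0 l.
Proof.
  revert x0; induction l as [|y l IH]; simpl; intros x0 Hb H; auto.
  destruct H as (?&?&?). repeat split; auto; lra.
Qed.

Lemma chain_in_last b x0 l : chain_in b x0 l -> l <> nil -> chain_end x0 l <= b.
Proof.
  revert x0; induction l as [|y l IH]; simpl; intros x0 H Hn; [congruence|].
  destruct H as (?&?&?). destruct l as [|z l']; auto. apply IH; auto. discriminate.
Qed.

Lemma chain_in_app2 b x0 l s t : chain_in b x0 l -> chain_end x0 l <= s -> s <= t -> t <= b ->
  chain_in b x0 (l ++ s :: t :: nil).
Proof.
  revert x0; induction l as [|y l IH]; simpl; intros x0 H H1 H2 H3.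
  - repeat split; lra.
  - destruct H as (?&?&?). repeat split; auto.
Qed.

Lemma variation_app beta x0 l m :
  variation beta x0 (l ++ m) = variation beta x0 l + variation beta (chain_end x0 l) m.
Proof.
  revert x0; induction l as [|y l IH]; simpl; intros x0; [ring|].
  rewrite IH; ring.
Qed.

Definition var_set (beta : R -> R) (x v : R) : Prop :=
  exists x0 l, 0 <= x0 /\ chain_in x x0 l /\ v = variation beta x0 l.

(* The variation of [beta] on [0, x]; [epsilon] returns junk when the supremum does not
   exist, but it does for [x <= L] below. *)
Definition total_var (beta : R -> R) (x : R) : R :=
  epsilon (inhabits 0) (fun s => is_lub (var_set beta x) s).

Section BoundedVariation.

Variables (beta : R -> R) (L Vb : R).
Hypothesis HBV : forall x0 l, 0 <= x0 -> chain_in L x0 l -> variation beta x0 l <= Vb.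

Lemma total_var_lub x : x <= L -> is_lub (var_set beta x) (total_var beta x).
Proof.
  intros Hx. unfold total_var. apply epsilon_spec.
  assert (Hb : bound (var_set beta x)).
  { exists Vb. intros v (x0 & l & H1 & H2 & ->). apply HBV; auto. eapply chain_in_mono; eauto. }
  assert (Hn : exists v, var_set beta x v).
  { exists 0, 0, nil. simpl; repeat split; auto; lra. }
  destruct (completeness _ Hb Hn) as [m Hm]. exists m; auto.
Qed.

Lemma total_var_step x s t y : 0 <= x -> x <= s -> s <= t -> t <= y -> y <= L ->
  total_var beta x + Rabs (beta t - beta s) <= total_var beta y.
Proof.
  intros H0 H1 H2 H3 H4.
  destruct (total_var_lub x ltac:(lra)) as [Ux Lx]. destruct (total_var_lub y H4) as [Uy Ly].
  assert (Hst : Rabs (beta t - beta s) <= total_var beta y).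
  { apply Uy. exists s, (t :: nil). simpl. repeat split; try lra. }
  enough (is_upper_bound (var_set beta x) (total_var beta y - Rabs (beta t - beta s)))
    by (specialize (Lx _ H); lra).
  intros v (x0 & l & Hx0 & Hc & ->).
  destruct l as [|z l'] eqn:El; [simpl; lra|].
  rewrite <- El in *.
  assert (Hl : chain_end x0 l <= x) by (apply (chain_in_last x); auto; subst; discriminate).
  assert (variation beta x0 (l ++ s :: t :: nil) <= total_var beta y).
  { apply Uy. exists x0, (l ++ s :: t :: nil). split; [auto|split; [|reflexivity]].
    apply chain_in_app2; try lra. eapply chain_in_mono; [|apply Hc]; lra. }
  rewrite variation_app in H. simpl in H.
  pose proof (Rabs_pos (beta s - beta (chain_end x0 l))). lra.
Qed.

End BoundedVariation.

(* [beta * c] oscillates on [x, y] by at most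
   [Cc (V(y) - V(x)) + Mb K (y - x)], with [V] the variation of [beta]. *)
Theorem HKint_exists_BV_mul beta L c Cc K Mb t1 :
  (exists Vb, forall x0 l, 0 <= x0 -> chain_in L x0 l -> variation beta x0 l <= Vb) ->
  (forall t, 0 <= t <= L -> Rabs (beta t) <= Mb) ->
  (forall t, 0 <= t <= L -> Rabs (c t) <= Cc) ->
  0 <= K ->
  (forall s t, 0 <= s <= L -> 0 <= t <= L -> Rabs (c s - c t) <= K * Rabs (s - t)) ->
  0 <= t1 <= L ->
  exists I, HKint (fun t => beta t * c t) 0 t1 I.
Proof.
  intros [Vb HBV] HMb HCc HK HKc Ht1.
  assert (HCc0 : 0 <= Cc) by (specialize (HCc 0 ltac:(lra)); pose proof (Rabs_pos (c 0)); lra).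
  assert (HMb0 : 0 <= Mb) by (specialize (HMb 0 ltac:(lra)); pose proof (Rabs_pos (beta 0)); lra).
  apply (HKint_exists_osc _ (fun t => Cc * total_var beta t + Mb * K * t)); [lra| |].
  - intros x y H1 H2 H3.
    pose proof (total_var_step beta L Vb HBV x y y y ltac:(lra) H2 ltac:(lra) ltac:(lra) ltac:(lra)).
    pose proof (Rabs_pos (beta y - beta y)).
    assert (Cc * total_var beta x <= Cc * total_var beta y) by (apply Rmult_le_compat_l; lra).
    assert (Mb * K * x <= Mb * K * y) by (apply Rmult_le_compat_l; [apply Rmult_le_pos|]; lra).
    lra.
  - intros x s t y Hx Hxs Hsy Hxt Hty Hy.
    assert (Hb : Rabs (beta s - beta t) <= total_var beta y - total_var beta x).
    { destruct (Rle_lt_dec s t).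
      - pose proof (total_var_step beta L Vb HBV x s t y ltac:(lra) Hxs r Hty ltac:(lra)).
        rewrite Rabs_minus_sym. lra.
      - pose proof (total_var_step beta L Vb HBV x t s y ltac:(lra) Hxt ltac:(lra) Hsy ltac:(lra)).
        lra. }
    replace (beta s * c s - beta t * c t) with ((beta s - beta t) * c s + beta t * (c s - c t))
      by ring.
    eapply Rle_trans; [apply Rabs_triang|]. rewrite !Rabs_mult.
    assert (Rabs (beta s - beta t) * Rabs (c s) <= (total_var beta y - total_var beta x) * Cc).
    { apply Rmult_le_compat; try apply Rabs_pos; auto. apply HCc; lra. }
    assert (Rabs (beta t) * Rabs (c s - c t) <= Mb * (K * (y - x))).
    { apply Rmult_le_compat; try apply Rabs_pos; [apply HMb; lra|].
      eapply Rle_trans; [apply HKc; lra|]. apply Rmult_le_compat_l; auto.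
      apply Rabs_le_between; lra. }
    lra.
Qed.

(** * A smooth bump function *)

Definition deriv_tower (D : nat -> R -> R) : Prop :=
  forall j x, derivable_pt_lim (D j) x (D (S j) x).

Lemma derivable_pt_lim_locally_eq f g x l d : 0 < d ->
  (forall y, Rabs (y - x) < d -> f y = g y) ->
  derivable_pt_lim f x l -> derivable_pt_lim g x l.
Proof.
  intros Hd Hfg H e He. destruct (H e He) as [d1 Hd1].
  assert (Hm : 0 < Rmin d1 d) by (apply Rmin_glb_lt; [apply cond_pos|auto]).
  exists (mkposreal _ Hm). intros h Hh Hhd. simpl in Hhd.
  pose proof (Rmin_l d1 d). pose proof (Rmin_r d1 d).
  rewrite <- (Hfg (x + h)), <- (Hfg x).
  - apply Hd1; auto. lra.
  - rewrite Rminus_diag, Rabs_R0; auto.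
  - replace (x + h - x) with h by ring. lra.
Qed.

Fixpoint peval (l : list R) (y : R) : R :=
  match l with nil => 0 | c :: l' => c + y * peval l' y end.

Fixpoint padd (p q : list R) : list R :=
  match p, q with nil, _ => q | _, nil => p | a :: p', b :: q' => (a + b) :: padd p' q' end.

Fixpoint pderiv (l : list R) : list R :=
  match l with nil => nil | c :: l' => padd l' (0 :: pderiv l') end.

(* The [j]-th derivative of [exp (- / x)] is [p_j (/ x) * exp (- / x)], where
   [p_(j+1) y = y^2 (p_j y - p_j' y)]. *)
Definition exp_inv_step (p : list R) : list R := 0 :: 0 :: padd p (map Ropp (pderiv p)).

Fixpoint exp_inv_poly (j : nat) : list R :=
  match j with O => 1 :: nil | S j => exp_inv_step (exp_inv_poly j) end.

Definition exp_inv_deriv (j : nat) (x : R) : R :=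
  if Rlt_dec 0 x then peval (exp_inv_poly j) (/ x) * exp (- / x) else 0.

Lemma peval_padd p q y : peval (padd p q) y = peval p y + peval q y.
Proof.
  revert q; induction p as [|a p IH]; intros [|b q]; simpl; try ring. rewrite IH; ring.
Qed.

Lemma peval_opp p y : peval (map Ropp p) y = - peval p y.
Proof. induction p as [|a p IH]; simpl; [ring|]. rewrite IH; ring. Qed.

Lemma peval_deriv l y : derivable_pt_lim (peval l) y (peval (pderiv l) y).
Proof.
  induction l as [|c l IH]; simpl; [apply (derivable_pt_lim_const 0 y)|].
  rewrite peval_padd. simpl.
  change (derivable_pt_lim (fct_cte c + id * peval l)%F y
            (peval l y + (0 + y * peval (pderiv l) y))).
  replace (peval l y + (0 + y * peval (pderiv l) y))
    with (0 + (1 * peval l y + id y * peval (pderiv l) y)) by (unfold id; ring).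
  apply derivable_pt_lim_plus; [apply derivable_pt_lim_const|].
  apply derivable_pt_lim_mult; auto. apply derivable_pt_lim_id.
Qed.

Lemma exp_inv_step_deriv p x : 0 < x ->
  derivable_pt_lim (fun y => peval p (/ y) * exp (- / y)) x
    (peval (exp_inv_step p) (/ x) * exp (- / x)).
Proof.
  intros Hx. apply is_derive_Reals.
  assert (H1 : is_derive (fun y => peval p (/ y)) x (scal (- (1) / x ^ 2) (peval (pderiv p) (/ x)))).
  { apply (is_derive_comp (peval p) (fun y => / y)).
    - apply is_derive_Reals, peval_deriv.
    - auto_derive; [lra | field; lra]. }
  assert (H2 : is_derive (fun y => exp (- / y)) x (exp (- / x) * / x ^ 2))
    by (auto_derive; [lra | field; lra]).
  replace (peval (exp_inv_step p) (/ x) * exp (- / x)) with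
    (scal (- (1) / x ^ 2) (peval (pderiv p) (/ x)) * exp (- / x)
     + peval p (/ x) * (exp (- / x) * / x ^ 2)).
  - apply (is_derive_mult (fun y => peval p (/ y)) (fun y => exp (- / y))); auto.
    intros; apply Rmult_comm.
  - unfold exp_inv_step. simpl. rewrite peval_padd, peval_opp.
    unfold scal; simpl; unfold mult; simpl. field. lra.
Qed.

Lemma exp_pow z n : exp z ^ n = exp (INR n * z).
Proof.
  induction n as [|n IH]; [simpl; rewrite Rmult_0_l, exp_0; auto|].
  rewrite S_INR. simpl. rewrite IH, <- exp_plus. f_equal; ring.
Qed.

(* From [exp y >= (y / (m+1))^(m+1)]. *)
Lemma pow_exp_small m e : 0 < e -> exists Y, 0 < Y /\ forall y, Y <= y -> y ^ m * exp (- y) < e.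
Proof.
  intros He. set (K := INR (S m)).
  assert (HK : 0 < K) by (apply lt_0_INR; lia).
  assert (HKm : 0 < K ^ S m) by (apply pow_lt; auto).
  assert (HKe : 0 < K ^ S m / e) by (apply Rdiv_lt_0_compat; auto).
  exists (K ^ S m / e + 1). split; [lra|].
  intros y Hy. assert (Hy0 : 0 < y) by lra. pose proof (exp_pos y) as Hey.
  assert (Hexp : (y / K) ^ S m <= exp y).
  { replace y with (K * (y / K)) at 2 by (field; lra).
    unfold K at 2; rewrite <- exp_pow; fold K.
    apply pow_incr. split; [apply Rlt_le, Rdiv_lt_0_compat; auto|].
    pose proof (exp_ineq1_le (y / K)). lra. }
  assert (Hb : y ^ m * exp (- y) * y <= K ^ S m).
  { rewrite exp_Ropp.
    unfold Rdiv in Hexp. rewrite Rpow_mult_distr, pow_inv in Hexp.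
    apply Rmult_le_compat_r with (r := K ^ S m / exp y) in Hexp; [|apply Rlt_le, Rdiv_lt_0_compat; auto].
    replace (exp y * (K ^ S m / exp y)) with (K ^ S m) in Hexp by (field; lra).
    replace (y ^ S m) with (y ^ m * y) in Hexp by (simpl; ring).
    replace (y ^ m * y * / K ^ S m * (K ^ S m / exp y)) with (y ^ m * / exp y * y) in Hexp
      by (field; split; lra).
    auto. }
  apply Rmult_lt_reg_r with y; auto.
  apply Rle_lt_trans with (K ^ S m); auto.
  apply Rlt_le_trans with (e * (K ^ S m / e + 1)); [|apply Rmult_le_compat_l; lra].
  replace (e * (K ^ S m / e + 1)) with (K ^ S m + e) by (field; lra). lra.
Qed.

Lemma poly_exp_small l : forall m e, 0 < e -> exists Y, 0 < Y /\ forall y, Y <= y ->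
  Rabs (y ^ m * peval l y * exp (- y)) < e.
Proof.
  induction l as [|c l IH]; intros m e He.
  - exists 1; split; [lra|]. intros; simpl. rewrite Rmult_0_r, Rmult_0_l, Rabs_R0; auto.
  - destruct (IH (S m) (e/2) ltac:(lra)) as [Y1 [HY1 K1]].
    assert (Hc : 0 < Rabs c + 1) by (pose proof (Rabs_pos c); lra).
    destruct (pow_exp_small m (e / 2 / (Rabs c + 1))) as [Y2 [HY2 K2]];
      [apply Rdiv_lt_0_compat; lra|].
    exists (Rmax Y1 Y2); split; [eapply Rlt_le_trans; [apply HY1 | apply Rmax_l]|].
    intros y Hy. pose proof (Rmax_l Y1 Y2). pose proof (Rmax_r Y1 Y2).
    specialize (K1 y ltac:(lra)). specialize (K2 y ltac:(lra)).
    simpl. replace (y ^ m * (c + y * peval l y) * exp (- y)) with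
      (c * (y ^ m * exp (- y)) + y * y ^ m * peval l y * exp (- y)) by ring.
    eapply Rle_lt_trans; [apply Rabs_triang|]. simpl in K1.
    assert (0 <= y ^ m * exp (- y))
      by (apply Rmult_le_pos; [apply pow_le; lra | apply Rlt_le, exp_pos]).
    rewrite Rabs_mult, (Rabs_right (y ^ m * exp (- y))) by lra.
    assert (Rabs c * (y ^ m * exp (- y)) <= Rabs c * (e / 2 / (Rabs c + 1)))
      by (apply Rmult_le_compat_l; [apply Rabs_pos | lra]).
    pose proof (mul_div_succ_lt (Rabs c) (e / 2) (Rabs_pos c) ltac:(lra)).
    lra.
Qed.

Lemma exp_inv_deriv_pos_eq j x : 0 < x ->
  exp_inv_deriv j x = peval (exp_inv_poly j) (/ x) * exp (- / x).
Proof. intros Hx. unfold exp_inv_deriv. destruct (Rlt_dec 0 x); [reflexivity | lra]. Qed.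

Lemma exp_inv_deriv_nonpos j x : x <= 0 -> exp_inv_deriv j x = 0.
Proof. intros Hx. unfold exp_inv_deriv. destruct (Rlt_dec 0 x); [lra | reflexivity]. Qed.

(* At 0 the difference quotient is [h^-1 p_j (h^-1) exp (- h^-1)], which tends to 0. *)
Lemma exp_inv_deriv_at0 j : derivable_pt_lim (exp_inv_deriv j) 0 0.
Proof.
  intros e He. destruct (poly_exp_small (exp_inv_poly j) 1 e He) as [Y [HY KY]].
  assert (Hd : 0 < / Y) by (apply Rinv_0_lt_compat; auto).
  exists (mkposreal _ Hd). intros h Hh Hhd. simpl in Hhd.
  rewrite Rplus_0_l, (exp_inv_deriv_nonpos j 0) by lra.
  destruct (Rlt_le_dec 0 h) as [Hh0|Hh0].
  - rewrite exp_inv_deriv_pos_eq by auto. rewrite Rabs_right in Hhd by lra.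
    assert (Y <= / h).
    { apply Rinv_lt_contravar in Hhd; [|apply Rmult_lt_0_compat; auto].
      rewrite Rinv_inv in Hhd. lra. }
    specialize (KY (/ h) H). simpl in KY.
    replace ((peval (exp_inv_poly j) (/ h) * exp (- / h) - 0) / h - 0)
      with (/ h * 1 * peval (exp_inv_poly j) (/ h) * exp (- / h)) by (field; lra).
    auto.
  - rewrite exp_inv_deriv_nonpos by auto.
    replace ((0 - 0) / h - 0) with 0 by (field; auto). rewrite Rabs_R0; auto.
Qed.

Lemma exp_inv_deriv_tower : deriv_tower exp_inv_deriv.
Proof.
  intros j x. destruct (Rlt_le_dec 0 x) as [Hx|Hx].
  - apply derivable_pt_lim_locally_eq
      with (f := fun y => peval (exp_inv_poly j) (/ y) * exp (- / y)) (d := x); auto.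
    + intros y Hy. apply Rabs_lt_between in Hy. rewrite exp_inv_deriv_pos_eq; auto; lra.
    + rewrite exp_inv_deriv_pos_eq by auto. apply exp_inv_step_deriv; auto.
  - destruct (Rle_lt_or_eq_dec _ _ Hx) as [Hx'|Hx0]; [|subst x].
    + rewrite exp_inv_deriv_nonpos by lra.
      apply derivable_pt_lim_locally_eq with (f := fct_cte 0) (d := - x); [lra| |].
      * intros y Hy. apply Rabs_lt_between in Hy. rewrite exp_inv_deriv_nonpos; auto; lra.
      * apply derivable_pt_lim_const.
    + rewrite exp_inv_deriv_nonpos by lra. apply exp_inv_deriv_at0.
Qed.

Lemma affine_deriv al be x : derivable_pt_lim (fun x => al * x + be) x al.
Proof. apply is_derive_Reals. auto_derive; auto. ring. Qed.

Lemma deriv_tower_affine D al be :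
  deriv_tower D -> deriv_tower (fun j x => al ^ j * D j (al * x + be)).
Proof.
  intros HD j x. simpl.
  replace (al * al ^ j * D (S j) (al * x + be)) with (al ^ j * (D (S j) (al * x + be) * al))
    by ring.
  change (derivable_pt_lim (mult_real_fct (al ^ j) (comp (D j) (fun x => al * x + be))) x
     (al ^ j * (D (S j) (al * x + be) * al))).
  apply derivable_pt_lim_scal, (derivable_pt_lim_comp (fun x => al * x + be) (D j));
    [apply affine_deriv | apply HD].
Qed.

Lemma deriv_tower_plus D1 D2 :
  deriv_tower D1 -> deriv_tower D2 -> deriv_tower (fun j x => D1 j x + D2 j x).
Proof.
  intros H1 H2 j x. change (derivable_pt_lim (D1 j + D2 j)%F x (D1 (S j) x + D2 (S j) x)).
  apply derivable_pt_lim_plus; auto.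
Qed.

Lemma deriv_tower_scal D c : deriv_tower D -> deriv_tower (fun j x => c * D j x).
Proof.
  intros H j x. change (derivable_pt_lim (mult_real_fct c (D j)) x (c * D (S j) x)).
  apply derivable_pt_lim_scal; auto.
Qed.

(* Leibniz's rule: [(i, j)] stands for the product of [D1 i] and [D2 j]. *)
Fixpoint leibniz_sum (D1 D2 : nat -> R -> R) (l : list (nat * nat)) (x : R) : R :=
  match l with nil => 0 | (i, j) :: l' => D1 i x * D2 j x + leibniz_sum D1 D2 l' x end.

Fixpoint leibniz_step (l : list (nat * nat)) : list (nat * nat) :=
  match l with nil => nil | (i, j) :: l' => (S i, j) :: (i, S j) :: leibniz_step l' end.

Lemma leibniz_sum_deriv D1 D2 l x : deriv_tower D1 -> deriv_tower D2 ->
  derivable_pt_lim (leibniz_sum D1 D2 l) x (leibniz_sum D1 D2 (leibniz_step l) x).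
Proof.
  intros H1 H2. induction l as [|[i j] l IH]; simpl; [apply (derivable_pt_lim_const 0 x)|].
  change (derivable_pt_lim (D1 i * D2 j + leibniz_sum D1 D2 l)%F x
     (D1 (S i) x * D2 j x + (D1 i x * D2 (S j) x + leibniz_sum D1 D2 (leibniz_step l) x))).
  replace (D1 (S i) x * D2 j x + (D1 i x * D2 (S j) x + leibniz_sum D1 D2 (leibniz_step l) x))
    with ((D1 (S i) x * D2 j x + D1 i x * D2 (S j) x) + leibniz_sum D1 D2 (leibniz_step l) x)
    by ring.
  apply derivable_pt_lim_plus; auto. apply derivable_pt_lim_mult; auto.
Qed.

Lemma deriv_tower_mult D1 D2 : deriv_tower D1 -> deriv_tower D2 ->
  exists D, deriv_tower D /\ D 0%nat = (fun x => D1 0%nat x * D2 0%nat x).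
Proof.
  intros H1 H2.
  exists (fun j => leibniz_sum D1 D2 (Nat.iter j leibniz_step ((0%nat, 0%nat) :: nil))).
  split.
  - intros j x. simpl. apply leibniz_sum_deriv; auto.
  - simpl. apply functional_extensionality; intros; ring.
Qed.

Definition rho (t : R) : R := exp_inv_deriv 0 (1 - t) * exp_inv_deriv 0 (1 + t).

Lemma exp_inv_pos x : 0 < x -> 0 < exp_inv_deriv 0 x.
Proof.
  intros Hx. rewrite exp_inv_deriv_pos_eq by auto. simpl.
  rewrite Rmult_0_r, Rplus_0_r, Rmult_1_l. apply exp_pos.
Qed.

Lemma exp_inv_nonneg x : 0 <= exp_inv_deriv 0 x.
Proof.
  destruct (Rlt_le_dec 0 x); [apply Rlt_le, exp_inv_pos; auto|].
  rewrite exp_inv_deriv_nonpos; lra.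
Qed.

Lemma rho_nonneg t : 0 <= rho t.
Proof. unfold rho. apply Rmult_le_pos; apply exp_inv_nonneg. Qed.

Lemma rho_pos t : -1 < t < 1 -> 0 < rho t.
Proof. intros. unfold rho. apply Rmult_lt_0_compat; apply exp_inv_pos; lra. Qed.

Lemma rho_out t : t <= -1 \/ 1 <= t -> rho t = 0.
Proof.
  intros [H|H]; unfold rho;
    [rewrite (exp_inv_deriv_nonpos 0 (1 + t)) | rewrite (exp_inv_deriv_nonpos 0 (1 - t))];
    lra.
Qed.

Lemma rho_smooth : exists D, deriv_tower D /\ D 0%nat = rho.
Proof.
  destruct (deriv_tower_mult _ _ (deriv_tower_affine exp_inv_deriv (-1) 1 exp_inv_deriv_tower)
                                 (deriv_tower_affine exp_inv_deriv 1 1 exp_inv_deriv_tower))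
    as [D [HD HD0]].
  exists D; split; auto. rewrite HD0. apply functional_extensionality; intros x. unfold rho.
  simpl. replace (-1 * x + 1) with (1 - x) by ring. replace (1 * x + 1) with (1 + x) by ring.
  ring.
Qed.

Definition Drho : nat -> R -> R := proj1_sig (constructive_indefinite_description _ rho_smooth).

Lemma Drho_tower : deriv_tower Drho.
Proof. unfold Drho. destruct (constructive_indefinite_description _ rho_smooth) as [D [H1 H2]]; auto. Qed.

Lemma Drho0 : Drho 0%nat = rho.
Proof. unfold Drho. destruct (constructive_indefinite_description _ rho_smooth) as [D [H1 H2]]; auto. Qed.

Lemma deriv_tower_continuous D j x : deriv_tower D -> continuous (D j) x.
Proof.
  intros HD. apply continuity_pt_filterlim.
  apply (derivable_continuous_pt _ _ (exist _ (D (S j) x) (HD j x))).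
Qed.

Lemma rho_continuous x : continuous rho x.
Proof. rewrite <- Drho0. apply deriv_tower_continuous, Drho_tower. Qed.

Lemma rho_deriv x : derivable_pt_lim rho x (Drho 1%nat x).
Proof. rewrite <- Drho0. apply Drho_tower. Qed.

(** * The du Bois-Reymond lemma *)

Lemma RInt_derivable f a : (forall x, continuous f x) ->
  forall x, derivable_pt_lim (fun y => RInt f a y) x (f x).
Proof.
  intros Hf x. apply is_derive_Reals. apply (is_derive_RInt f (fun y => RInt f a y) a x); auto.
  apply filter_forall. intros b. apply RInt_correct, ex_RInt_continuous. intros; apply Hf.
Qed.

Lemma eq_of_deriv_zero f f' a b : a <= b ->
  (forall c, a <= c <= b -> derivable_pt_lim f c (f' c)) ->
  (forall c, a < c < b -> f' c = 0) -> f b = f a.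
Proof.
  intros Hab Hf Hz. destruct (Req_dec a b) as [<-|Hne]; auto.
  destruct (MVT_cor2 f f' a b ltac:(lra) Hf) as [c [Hc1 Hc2]]. rewrite Hz in Hc1; auto. lra.
Qed.

Definition rho_int (t : R) : R := RInt rho (-1) t.
Definition rho_int2 (t : R) : R := RInt rho_int (-1) t.
Definition rho_mass : R := rho_int 1.

Lemma rho_int_deriv x : derivable_pt_lim rho_int x (rho x).
Proof. apply RInt_derivable, rho_continuous. Qed.

Lemma rho_int_continuous x : continuous rho_int x.
Proof.
  apply continuity_pt_filterlim.
  apply (derivable_continuous_pt _ _ (exist _ (rho x) (rho_int_deriv x))).
Qed.

Lemma rho_int2_deriv x : derivable_pt_lim rho_int2 x (rho_int x).
Proof. apply RInt_derivable, rho_int_continuous. Qed.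

Lemma rho_mass_pos : 0 < rho_mass.
Proof.
  apply RInt_gt_0; [lra | intros; apply rho_pos; lra | intros; apply rho_continuous].
Qed.

Lemma rho_int_left t : t <= -1 -> rho_int t = 0.
Proof.
  intros Ht. transitivity (rho_int (-1)).
  - symmetry. apply (eq_of_deriv_zero rho_int rho t (-1)); auto.
    + intros; apply rho_int_deriv.
    + intros; apply rho_out; lra.
  - unfold rho_int. rewrite RInt_point. reflexivity.
Qed.

Lemma rho_int_right t : 1 <= t -> rho_int t = rho_mass.
Proof.
  intros Ht. apply (eq_of_deriv_zero rho_int rho 1 t); auto.
  - intros; apply rho_int_deriv.
  - intros; apply rho_out; lra.
Qed.

Lemma rho_int2_left t : t <= -1 -> rho_int2 t = 0.
Proof.
  intros Ht. transitivity (rho_int2 (-1)).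
  - symmetry. apply (eq_of_deriv_zero rho_int2 rho_int t (-1)); auto.
    + intros; apply rho_int2_deriv.
    + intros; apply rho_int_left; lra.
  - unfold rho_int2. rewrite RInt_point. reflexivity.
Qed.

Lemma rho_int2_right t : 1 <= t -> rho_int2 t = rho_int2 1 + rho_mass * (t - 1).
Proof.
  intros Ht. pose (g := fun y => rho_int2 y - rho_mass * y).
  enough (g t = g 1) by (unfold g in *; lra).
  apply (eq_of_deriv_zero g (fun y => rho_int y - rho_mass * 1) 1 t); auto.
  - intros c Hc. unfold g. apply derivable_pt_lim_minus; [apply rho_int2_deriv|].
    change (derivable_pt_lim (mult_real_fct rho_mass id) c (rho_mass * 1)).
    apply derivable_pt_lim_scal, derivable_pt_lim_id.
  - intros c Hc. rewrite rho_int_right; lra.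
Qed.

Definition rho_int2_tower (j : nat) : R -> R :=
  match j with O => rho_int2 | S O => rho_int | S (S j') => Drho j' end.

Lemma rho_int2_tower_deriv : deriv_tower rho_int2_tower.
Proof.
  intros [|[|j]] x; simpl; [apply rho_int2_deriv | rewrite Drho0; apply rho_int_deriv | apply Drho_tower].
Qed.

Ltac destr_le := repeat match goal with
 | |- context [Rle_dec ?x ?y] => destruct (Rle_dec x y)
 | H : context [Rle_dec ?x ?y] |- _ => destruct (Rle_dec x y)
 end.

Definition clamp (t : R) : R := Rmax (-1) (Rmin 1 t).

Lemma clamp_in t : -1 <= clamp t <= 1.
Proof. unfold clamp, Rmax, Rmin. destr_le; lra. Qed.

Lemma clamp_lip a b : Rabs (clamp a - clamp b) <= Rabs (a - b).
Proof.
  pose proof (Rle_abs (a - b)). pose proof (Rle_abs (- (a - b))). rewrite Rabs_Ropp in *.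
  unfold clamp, Rmax, Rmin. destr_le; apply Rabs_le_between; lra.
Qed.

Lemma rho_clamp t : rho t = rho (clamp t).
Proof. unfold clamp, Rmax, Rmin. destr_le; try reflexivity; rewrite !rho_out; lra. Qed.

Lemma rho_lip : exists Lr, 0 <= Lr /\ forall a b, Rabs (rho a - rho b) <= Lr * Rabs (a - b).
Proof.
  destruct (continuity_ab_maj (fun t => Rabs (Drho 1%nat t)) (-1) 1 ltac:(lra)) as [m [Hm1 Hm2]].
  { intros c Hc. apply (continuity_pt_comp (Drho 1%nat) Rabs); [|apply Rcontinuity_abs].
    apply continuity_pt_filterlim, deriv_tower_continuous, Drho_tower. }
  exists (Rabs (Drho 1%nat m)). split; [apply Rabs_pos|].
  intros a b. rewrite (rho_clamp a), (rho_clamp b).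
  pose proof (clamp_in a). pose proof (clamp_in b).
  destruct (MVT_abs rho (Drho 1%nat) (clamp b) (clamp a)) as [c [Hc1 Hc2]];
    [intros; apply rho_deriv|].
  rewrite Hc1. apply Rle_trans with (Rabs (Drho 1%nat m) * Rabs (clamp a - clamp b)).
  - apply Rmult_le_compat_r; [apply Rabs_pos|]. apply Hm1.
    split; [eapply Rle_trans; [|apply Hc2]; apply Rmin_glb; lra
           | eapply Rle_trans; [apply Hc2|]; apply Rmax_lub; lra].
  - apply Rmult_le_compat_l; [apply Rabs_pos | apply clamp_lip].
Qed.

Lemma rho_bounded : exists Rb, 0 <= Rb /\ forall a, rho a <= Rb.
Proof.
  destruct (continuity_ab_maj rho (-1) 1 ltac:(lra)) as [m [Hm1 Hm2]].
  { intros c Hc. apply continuity_pt_filterlim, rho_continuous. }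
  exists (rho m). split; [apply rho_nonneg|]. intros a. rewrite rho_clamp. apply Hm1, clamp_in.
Qed.

Definition mollifier (h s t : R) : R := / h * rho ((t - s) / h).

Lemma comp_shift_deriv F F' h s t : h <> 0 ->
  derivable_pt_lim F ((t - s) / h) (F' ((t - s) / h)) ->
  derivable_pt_lim (fun t => F ((t - s) / h)) t (/ h * F' ((t - s) / h)).
Proof.
  intros Hh HF. rewrite Rmult_comm.
  apply (derivable_pt_lim_comp (fun t => (t - s) / h) F); auto.
  apply is_derive_Reals. auto_derive; auto. field; auto.
Qed.

Lemma mollifier_nonneg h s t : 0 < h -> 0 <= mollifier h s t.
Proof.
  intros. unfold mollifier. apply Rmult_le_pos; [apply Rlt_le, Rinv_0_lt_compat; auto | apply rho_nonneg].
Qed.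

Lemma mollifier_out h s t : 0 < h -> h <= Rabs (t - s) -> mollifier h s t = 0.
Proof.
  intros Hh Ht. unfold mollifier. rewrite rho_out; [ring|].
  destruct (Rle_lt_dec 0 (t - s)).
  - right. rewrite Rabs_right in Ht by lra. apply Rle_div_r; lra.
  - left. rewrite Rabs_left in Ht by lra. apply Rle_div_l; lra.
Qed.

Lemma HKint_mollifier h s L : 0 < h -> h <= s -> s + h <= L -> HKint (mollifier h s) 0 L rho_mass.
Proof.
  intros Hh H1 H2.
  replace rho_mass with (rho_int ((L - s) / h) - rho_int ((0 - s) / h)).
  - apply (HKint_FTC (fun t => rho_int ((t - s) / h))); [lra|].
    intros t _. unfold mollifier. apply comp_shift_deriv; [lra | apply rho_int_deriv].
  - rewrite rho_int_right, rho_int_left; [ring | apply Rle_div_l | apply Rle_div_r]; lra.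
Qed.

Definition supp_in (L : R) (D : nat -> R -> R) : Prop :=
  exists a b, 0 < a /\ a <= b /\ b < L /\ forall t, t < a \/ b < t -> D 0%nat t = 0.

(* [h rho_int2 ((t - s) / h)]: a smoothed ramp [(t - s)^+ rho_mass], whose second
   derivative is [mollifier h s]. *)
Definition smooth_ramp (h s : R) (j : nat) (t : R) : R :=
  h * ((/ h) ^ j * rho_int2_tower j (/ h * t + - s / h)).

Lemma smooth_ramp_tower h s : deriv_tower (smooth_ramp h s).
Proof. apply deriv_tower_scal, deriv_tower_affine, rho_int2_tower_deriv. Qed.

Lemma smooth_ramp_2 h s t : 0 < h -> smooth_ramp h s 2 t = mollifier h s t.
Proof.
  intros Hh. unfold smooth_ramp, mollifier. simpl. rewrite Drho0.
  replace ((t - s) / h) with (/ h * t + - s / h) by (field; lra). field. lra.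
Qed.

Lemma smooth_ramp_left h s t : 0 < h -> t - s <= - h -> smooth_ramp h s 0 t = 0.
Proof.
  intros Hh Ht. unfold smooth_ramp. simpl. rewrite rho_int2_left; [ring|].
  replace (/ h * t + - s / h) with ((t - s) / h) by (field; lra). apply Rle_div_l; lra.
Qed.

Lemma smooth_ramp_right h s t : 0 < h -> h <= t - s ->
  smooth_ramp h s 0 t = h * rho_int2 1 + rho_mass * (t - s - h).
Proof.
  intros Hh Ht. unfold smooth_ramp. simpl. rewrite rho_int2_right.
  - field. lra.
  - replace (/ h * t + - s / h) with ((t - s) / h) by (field; lra). apply Rle_div_r; lra.
Qed.

Lemma Rabs_le_lin_eq0 S C h0 : 0 < h0 ->
  (forall h, 0 < h -> h <= h0 -> Rabs S <= C * h) -> S = 0.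
Proof.
  intros Hh0 H. destruct (Req_dec S 0) as [|HS]; auto. exfalso.
  pose proof (Rabs_pos_lt S HS).
  set (h := Rmin h0 (Rabs S / (2 * (Rabs C + 1)))).
  assert (Hh : 0 < h) by (apply Rmin_glb_lt; auto; apply Rdiv_lt_0_compat; pose proof (Rabs_pos C); lra).
  specialize (H h Hh (Rmin_l _ _)).
  assert (h <= Rabs S / (2 * (Rabs C + 1))) by apply Rmin_r.
  assert (C * h <= Rabs C * h) by (apply Rmult_le_compat_r; [lra | apply Rle_abs]).
  assert ((Rabs C + 1) * h <= Rabs S / 2).
  { apply Rmult_le_compat_l with (r := Rabs C + 1) in H1; [|pose proof (Rabs_pos C); lra].
    replace ((Rabs C + 1) * (Rabs S / (2 * (Rabs C + 1)))) with (Rabs S / 2) in H1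
      by (field; pose proof (Rabs_pos C); lra).
    lra. }
  lra.
Qed.

Lemma smooth_ramp_combo_supp L h s1 s2 s3 :
  0 < h -> h < s1 -> s1 + h < L -> h < s2 -> s2 + h < L -> h < s3 -> s3 + h < L ->
  supp_in L (fun j t => (s2 - s3) * smooth_ramp h s1 j t + (s3 - s1) * smooth_ramp h s2 j t
                        + (s1 - s2) * smooth_ramp h s3 j t).
Proof.
  intros Hh H1 H1' H2 H2' H3 H3'.
  set (m := Rmin s1 (Rmin s2 s3)). set (M := Rmax s1 (Rmax s2 s3)).
  assert (Hm : m <= s1 /\ m <= s2 /\ m <= s3 /\ (m = s1 \/ m = s2 \/ m = s3))
    by (unfold m, Rmin; destr_le; repeat split; try lra; tauto).
  assert (HM : s1 <= M /\ s2 <= M /\ s3 <= M /\ (M = s1 \/ M = s2 \/ M = s3))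
    by (unfold M, Rmax; destr_le; repeat split; lra).
  exists (m - h), (M + h).
  split; [destruct Hm as (_&_&_&[E|[E|E]]); rewrite E; lra|].
  split; [lra|]. split; [destruct HM as (_&_&_&[E|[E|E]]); rewrite E; lra|].
  intros t [Ht|Ht].
  - rewrite !smooth_ramp_left by lra. ring.
  - rewrite !smooth_ramp_right by lra. ring.
Qed.

Section DuBoisReymond.

Variables (U : R -> R) (K L : R).
Hypothesis HL : 0 < L.
Hypothesis HK : 0 <= K.
Hypothesis HU : forall s t, 0 <= s <= L -> 0 <= t <= L -> Rabs (U s - U t) <= K * Rabs (s - t).

Lemma lip_bound t : 0 <= t <= L -> Rabs (U t) <= Rabs (U 0) + K * L.
Proof.
  intros Ht. pose proof (HU t 0 Ht ltac:(lra)) as HU'.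
  rewrite Rminus_0_r, (Rabs_right t) in HU' by lra.
  replace (U t) with (U 0 + (U t - U 0)) by ring. eapply Rle_trans; [apply Rabs_triang|].
  assert (K * t <= K * L) by (apply Rmult_le_compat_l; lra). lra.
Qed.

Lemma HKint_exists_mul_mollifier h s : 0 < h ->
  exists I, HKint (fun t => U t * mollifier h s t) 0 L I.
Proof.
  intros Hh. destruct rho_lip as [Lr [HLr HLr']]. destruct rho_bounded as [Rb [HRb HRb']].
  set (UB := Rabs (U 0) + K * L).
  assert (HUB : 0 <= UB) by (unfold UB; pose proof (Rabs_pos (U 0)); nra).
  assert (Hih : 0 < / h) by (apply Rinv_0_lt_compat; auto).
  set (K' := UB * (Lr * / h * / h) + Rb * / h * K).
  assert (HK' : 0 <= K') by (unfold K'; apply Rplus_le_le_0_compat; repeat apply Rmult_le_pos; lra).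
  apply (HKint_exists_osc _ (fun t => K' * t)); [lra | intros; apply Rmult_le_compat_l; lra|].
  intros x s0 t y Hx Hxs Hsy Hxt Hty Hy.
  assert (Hr1 : Rabs (mollifier h s s0 - mollifier h s t) <= Lr * / h * / h * Rabs (s0 - t)).
  { unfold mollifier. rewrite <- Rmult_minus_distr_l, Rabs_mult, Rabs_right by lra.
    specialize (HLr' ((s0 - s) / h) ((t - s) / h)).
    replace ((s0 - s) / h - (t - s) / h) with (/ h * (s0 - t)) in HLr' by (field; lra).
    rewrite Rabs_mult, (Rabs_right (/ h)) in HLr' by lra.
    apply Rle_trans with (/ h * (Lr * (/ h * Rabs (s0 - t)))); [apply Rmult_le_compat_l; lra|].
    right; ring. }
  assert (Hr2 : Rabs (mollifier h s t) <= Rb * / h).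
  { rewrite Rabs_right by (apply Rle_ge, mollifier_nonneg; auto). unfold mollifier.
    rewrite Rmult_comm. apply Rmult_le_compat_r; [lra | apply HRb']. }
  assert (Hu1 := lip_bound s0 ltac:(lra)). fold UB in Hu1.
  assert (Hu2 := HU s0 t ltac:(lra) ltac:(lra)).
  assert (Hst : Rabs (s0 - t) <= y - x) by (apply Rabs_le_between; lra).
  replace (U s0 * mollifier h s s0 - U t * mollifier h s t) with
    (U s0 * (mollifier h s s0 - mollifier h s t) + mollifier h s t * (U s0 - U t)) by ring.
  eapply Rle_trans; [apply Rabs_triang|]. rewrite !Rabs_mult.
  apply Rle_trans with (K' * Rabs (s0 - t)).
  - unfold K'. rewrite Rmult_plus_distr_r. apply Rplus_le_compat.
    + rewrite Rmult_assoc. apply Rmult_le_compat; try apply Rabs_pos; auto.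
    + replace (Rb * / h * K * Rabs (s0 - t)) with ((Rb * / h) * (K * Rabs (s0 - t))) by ring.
      apply Rmult_le_compat; try apply Rabs_pos; auto.
  - replace (K' * y - K' * x) with (K' * (y - x)) by ring. apply Rmult_le_compat_l; auto.
Qed.

Lemma HKint_mul_mollifier_close h s I : 0 < h -> h <= s -> s + h <= L ->
  HKint (fun t => U t * mollifier h s t) 0 L I -> Rabs (I - U s * rho_mass) <= K * h * rho_mass.
Proof.
  intros Hh H1 H2 HI.
  assert (HM := HKint_mollifier h s L Hh H1 H2).
  assert (HD : HKint (fun t => U t * mollifier h s t - U s * mollifier h s t) 0 L (I - U s * rho_mass))
    by (apply HKint_minus; auto; apply HKint_scal; auto).
  assert (Hpt : forall t, 0 <= t <= L ->
            Rabs (U t * mollifier h s t - U s * mollifier h s t) <= K * h * mollifier h s t).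
  { intros t Ht. destruct (Rlt_le_dec (Rabs (t - s)) h) as [Hts|Hts].
    - replace (U t * mollifier h s t - U s * mollifier h s t) with ((U t - U s) * mollifier h s t)
        by ring.
      rewrite Rabs_mult, (Rabs_right (mollifier h s t)) by (apply Rle_ge, mollifier_nonneg; auto).
      apply Rmult_le_compat_r; [apply mollifier_nonneg; auto|].
      apply Rle_trans with (K * Rabs (t - s)); [apply HU; lra | apply Rmult_le_compat_l; lra].
    - rewrite mollifier_out by auto. rewrite !Rmult_0_r, Rminus_diag, Rabs_R0; lra. }
  apply Rabs_le_between. split.
  - replace (- (K * h * rho_mass)) with (- (K * h) * rho_mass) by ring.
    apply (HKint_le (fun t => - (K * h) * mollifier h s t)
             (fun t => U t * mollifier h s t - U s * mollifier h s t) 0 L); auto; [lra| |].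
    + intros t Ht. specialize (Hpt t Ht). apply Rabs_le_between in Hpt. lra.
    + apply HKint_scal; auto.
  - apply (HKint_le (fun t => U t * mollifier h s t - U s * mollifier h s t)
             (fun t => K * h * mollifier h s t) 0 L); auto; [lra| |].
    + intros t Ht. specialize (Hpt t Ht). apply Rabs_le_between in Hpt. lra.
    + apply HKint_scal; auto.
Qed.

Hypothesis HDBR : forall D, deriv_tower D -> supp_in L D ->
  HKint (fun t => U t * D 2%nat t) 0 L 0.

(* With [a1 + a2 + a3 = 0] and [a1 s1 + a2 s2 + a3 s3 = 0] the ramps combine into a test
   function whose second derivative is a combination of mollifiers; letting [h -> 0]
   gives [a1 U s1 + a2 U s2 + a3 U s3 = 0]. *)
Lemma three_point_estimate s1 s2 s3 h :
  0 < h -> h < s1 -> s1 + h < L -> h < s2 -> s2 + h < L -> h < s3 -> s3 + h < L ->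
  Rabs ((s2 - s3) * U s1 + (s3 - s1) * U s2 + (s1 - s2) * U s3)
  <= (Rabs (s2 - s3) + Rabs (s3 - s1) + Rabs (s1 - s2)) * K * h.
Proof.
  intros Hh H1 H1' H2 H2' H3 H3'.
  set (a1 := s2 - s3). set (a2 := s3 - s1). set (a3 := s1 - s2).
  destruct (HKint_exists_mul_mollifier h s1 Hh) as [I1 HI1].
  destruct (HKint_exists_mul_mollifier h s2 Hh) as [I2 HI2].
  destruct (HKint_exists_mul_mollifier h s3 Hh) as [I3 HI3].
  pose proof (HKint_mul_mollifier_close h s1 I1 Hh ltac:(lra) ltac:(lra) HI1) as E1.
  pose proof (HKint_mul_mollifier_close h s2 I2 Hh ltac:(lra) ltac:(lra) HI2) as E2.
  pose proof (HKint_mul_mollifier_close h s3 I3 Hh ltac:(lra) ltac:(lra) HI3) as E3.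
  set (D := fun j t => a1 * smooth_ramp h s1 j t + a2 * smooth_ramp h s2 j t
                       + a3 * smooth_ramp h s3 j t).
  assert (HT : deriv_tower D).
  { apply deriv_tower_plus; [apply deriv_tower_plus|]; apply deriv_tower_scal, smooth_ramp_tower. }
  assert (HS : supp_in L D) by (apply smooth_ramp_combo_supp; lra).
  assert (Hsum : a1 * I1 + a2 * I2 + a3 * I3 = 0).
  { apply (HKint_unique (fun t => a1 * (U t * mollifier h s1 t) + a2 * (U t * mollifier h s2 t)
                                  + a3 * (U t * mollifier h s3 t)) 0 L); [lra| |].
    - apply HKint_plus; [apply HKint_plus|]; apply HKint_scal; auto.
    - eapply HKint_ext; [|apply (HDBR D HT HS)].
      intros t _. unfold D. rewrite !smooth_ramp_2 by auto. ring. }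
  pose proof rho_mass_pos.
  apply Rmult_le_reg_r with rho_mass; auto.
  rewrite <- (Rabs_right rho_mass) at 1 by lra. rewrite <- Rabs_mult.
  replace ((a1 * U s1 + a2 * U s2 + a3 * U s3) * rho_mass) with
    (- (a1 * (I1 - U s1 * rho_mass) + a2 * (I2 - U s2 * rho_mass) + a3 * (I3 - U s3 * rho_mass)))
    by lra.
  rewrite Rabs_Ropp.
  eapply Rle_trans; [apply Rabs_triang|].
  eapply Rle_trans; [apply Rplus_le_compat_r, Rabs_triang|].
  rewrite !Rabs_mult.
  pose proof (Rabs_pos a1). pose proof (Rabs_pos a2). pose proof (Rabs_pos a3).
  apply Rmult_le_compat_l with (r := Rabs a1) in E1; auto.
  apply Rmult_le_compat_l with (r := Rabs a2) in E2; auto.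
  apply Rmult_le_compat_l with (r := Rabs a3) in E3; auto.
  lra.
Qed.

Lemma three_point s1 s2 s3 : 0 < s1 < L -> 0 < s2 < L -> 0 < s3 < L ->
  (s2 - s3) * U s1 + (s3 - s1) * U s2 + (s1 - s2) * U s3 = 0.
Proof.
  intros Hs1 Hs2 Hs3.
  set (h0 := Rmin (Rmin (Rmin s1 (L - s1)) (Rmin s2 (L - s2))) (Rmin s3 (L - s3)) / 2).
  assert (Hh0 : 0 < h0 /\ h0 <= s1 / 2 /\ h0 <= (L - s1) / 2 /\ h0 <= s2 / 2
                /\ h0 <= (L - s2) / 2 /\ h0 <= s3 / 2 /\ h0 <= (L - s3) / 2)
    by (unfold h0, Rmin; destr_le; repeat split; lra).
  apply (Rabs_le_lin_eq0 _ ((Rabs (s2 - s3) + Rabs (s3 - s1) + Rabs (s1 - s2)) * K) h0); [lra|].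
  intros h Hh Hhh. apply three_point_estimate; lra.
Qed.

Lemma lip_affine_closure A B :
  (forall s, 0 < s < L -> U s = A + B * s) -> forall t, 0 <= t <= L -> U t = A + B * t.
Proof.
  intros Hint t Ht.
  apply Rminus_diag_uniq, (Rabs_le_lin_eq0 _ ((K + Rabs B) * L) 1); [lra|].
  intros d Hd Hd1.
  set (s := t + d * (L / 2 - t)).
  assert (Hs : 0 < s < L) by (unfold s; split; nra).
  replace (U t - (A + B * t)) with ((U t - U s) + B * (s - t)) by (rewrite (Hint s Hs); ring).
  eapply Rle_trans; [apply Rabs_triang|]. rewrite Rabs_mult.
  assert (Hst : Rabs (t - s) <= d * L) by (unfold s; apply Rabs_le_between; nra).
  rewrite Rabs_minus_sym in Hst.
  pose proof (HU t s Ht ltac:(lra)) as HUts. rewrite (Rabs_minus_sym t s) in HUts.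
  pose proof (Rabs_pos B).
  assert (K * Rabs (s - t) <= K * (d * L)) by (apply Rmult_le_compat_l; lra).
  assert (Rabs B * Rabs (s - t) <= Rabs B * (d * L)) by (apply Rmult_le_compat_l; lra).
  lra.
Qed.

Theorem du_bois_reymond : exists A B, forall t, 0 <= t <= L -> U t = A + B * t.
Proof.
  set (p := L / 3). set (q := 2 * L / 3).
  set (B := (U q - U p) / (q - p)). set (A := U p - B * p).
  exists A, B. apply lip_affine_closure.
  intros s Hs. pose proof (three_point p s q ltac:(unfold p; lra) Hs ltac:(unfold q; lra)).
  assert (Hqp : q - p <> 0) by (unfold p, q; lra).
  apply Rmult_eq_reg_r with (q - p); auto. unfold A, B.
  replace ((U p - (U q - U p) / (q - p) * p + (U q - U p) / (q - p) * s) * (q - p)) with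
    (U p * (q - p) + (U q - U p) * (s - p)) by (field; auto).
  lra.
Qed.

End DuBoisReymond.

(** * Test functions and Lipschitz functions *)

Lemma W1inf_HKint L g g' : W1inf L g g' ->
  forall x y, 0 <= x -> x <= y -> y <= L -> HKint g' x y (g y - g x).
Proof.
  intros [_ H] x y H1 H2 H3. replace (g y - g x) with ((g y - g 0) - (g x - g 0)) by ring.
  apply HKint_chasles with 0; auto; apply H; lra.
Qed.

Lemma W1inf_deriv_bound L g g' : W1inf L g g' ->
  exists M, 0 <= M /\ forall t, 0 <= t <= L -> Rabs (g' t) <= M.
Proof.
  intros [[M HM] _]. exists (Rmax M 0). split; [apply Rmax_r|].
  intros t Ht. eapply Rle_trans; [apply HM; auto | apply Rmax_l].
Qed.

Lemma W1inf_lip L g g' : W1inf L g g' -> exists K, 0 <= K /\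
  forall s t, 0 <= s <= L -> 0 <= t <= L -> Rabs (g s - g t) <= K * Rabs (s - t).
Proof.
  intros HW. destruct (W1inf_deriv_bound L g g' HW) as [M [HM0 HM]]. exists M; split; auto.
  assert (Hle : forall s t, 0 <= s -> s <= t -> t <= L -> Rabs (g t - g s) <= M * Rabs (t - s)).
  { intros s t Hs Hst Ht. rewrite (Rabs_right (t - s)) by lra.
    apply (HKint_bound g' s t); auto; [intros; apply HM; lra | apply (W1inf_HKint L); auto]. }
  intros s t Hs Ht. destruct (Rle_lt_dec s t).
  - rewrite (Rabs_minus_sym (g s)), (Rabs_minus_sym s). apply Hle; lra.
  - apply Hle; lra.
Qed.

Lemma lip_of_deriv_on F F' a b M : (forall t, a <= t <= b -> derivable_pt_lim F t (F' t)) ->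
  (forall t, a <= t <= b -> Rabs (F' t) <= M) ->
  forall s t, a <= s <= b -> a <= t <= b -> Rabs (F s - F t) <= M * Rabs (s - t).
Proof.
  intros HF HM s t Hs Ht.
  assert (Hin : forall c, Rmin t s <= c <= Rmax t s -> a <= c <= b).
  { intros c Hc. split.
    - eapply Rle_trans; [|apply Hc]. apply Rmin_glb; lra.
    - eapply Rle_trans; [apply Hc|]. apply Rmax_lub; lra. }
  destruct (MVT_abs F F' t s) as [c [Hc1 Hc2]]; [intros; apply HF, Hin; auto|].
  rewrite Hc1. apply Rmult_le_compat_r; [apply Rabs_pos | apply HM, Hin; auto].
Qed.

Lemma lip_plus_scaled f S T K M c L : 0 <= c ->
  (forall s t, 0 <= s <= L -> 0 <= t <= L -> Rabs (f s - f t) <= K * Rabs (s - t)) ->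
  (forall t, 0 <= t <= L -> derivable_pt_lim S t (T t)) ->
  (forall t, 0 <= t <= L -> Rabs (T t) <= M) ->
  forall s t, 0 <= s <= L -> 0 <= t <= L ->
    Rabs (f s + c * S s - (f t + c * S t)) <= (K + c * M) * Rabs (s - t).
Proof.
  intros Hc Hf HS HT s t Hs Ht.
  replace (f s + c * S s - (f t + c * S t)) with ((f s - f t) + c * (S s - S t)) by ring.
  eapply Rle_trans; [apply Rabs_triang|]. rewrite Rabs_mult, (Rabs_right c) by lra.
  pose proof (Hf s t Hs Ht). pose proof (lip_of_deriv_on S T 0 L M HS HT s t Hs Ht).
  assert (c * Rabs (S s - S t) <= c * (M * Rabs (s - t))) by (apply Rmult_le_compat_l; auto).
  lra.
Qed.

Lemma lip_continuous g K : 0 <= K -> (forall s t, Rabs (g s - g t) <= K * Rabs (s - t)) ->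
  forall x, continuous g x.
Proof.
  intros HK H x. apply continuity_pt_filterlim. intros e He.
  exists (e / (K + 1)). split; [apply Rdiv_lt_0_compat; lra|].
  intros y [_ Hy]. simpl in *. unfold R_dist in *. eapply Rle_lt_trans; [apply H|].
  apply Rle_lt_trans with (K * (e / (K + 1))); [apply Rmult_le_compat_l; lra|].
  apply mul_div_succ_lt; auto.
Qed.

Lemma deriv_zero_outside f f' x a b : (forall t, derivable_pt_lim f t (f' t)) ->
  (forall t, t < a \/ b < t -> f t = 0) -> x < a \/ b < x -> f' x = 0.
Proof.
  intros Hf Hz Hx.
  assert (Hd : exists d, 0 < d /\ forall y, Rabs (y - x) < d -> fct_cte 0 y = f y).
  { destruct Hx as [Hx|Hx]; [exists (a - x) | exists (x - b)]; split; try lra;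
      intros y Hy; unfold fct_cte; symmetry; apply Hz; apply Rabs_lt_between in Hy; lra. }
  destruct Hd as [d [Hd1 Hd2]].
  pose proof (derivable_pt_lim_locally_eq (fct_cte 0) f x 0 d Hd1 Hd2
                (derivable_pt_lim_const 0 x)).
  symmetry. apply (uniqueness_limite f x); auto.
Qed.

Lemma deriv_tower_zero_outside D a b : deriv_tower D ->
  (forall t, t < a \/ b < t -> D 0%nat t = 0) ->
  forall j t, t < a \/ b < t -> D j t = 0.
Proof.
  intros HD H0 j. induction j as [|j IH]; intros t Ht; auto.
  apply (deriv_zero_outside (D j) (D (S j)) t a b); auto.
Qed.

Lemma test_fun_of_tower L D j : deriv_tower D -> supp_in L D -> test_fun L (D j) (D (S j)).
Proof.
  intros HD [a [b (H1 & H2 & H3 & H4)]]. split.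
  - exists (fun m => D (j + m)%nat). split; [f_equal; lia|]. split; [f_equal; lia|].
    intros m x. rewrite Nat.add_succ_r. apply (HD (j + m)%nat x).
  - exists a, b. repeat split; auto. intros; apply (deriv_tower_zero_outside D a b HD H4); auto.
Qed.

Lemma tower_of_test_fun L phi phi' : test_fun L phi phi' ->
  exists D, deriv_tower D /\ supp_in L D /\ D 0%nat = phi /\ D 1%nat = phi'.
Proof.
  intros [[D (HD0 & HD1 & HD)] [a [b (H1 & H2 & H3 & H4)]]].
  exists D. repeat split; auto. exists a, b. repeat split; auto. intros; rewrite HD0; auto.
Qed.

Lemma zero_test_fun L : 0 < L -> test_fun L (fun _ => 0) (fun _ => 0).
Proof.
  intros HL. split.
  - exists (fun _ _ => 0). repeat split; auto. intros j x. apply (derivable_pt_lim_const 0 x).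
  - exists (L / 2), (L / 2). repeat split; lra.
Qed.

Lemma supp_in_ends L D j : deriv_tower D -> supp_in L D -> D j 0 = 0 /\ D j L = 0.
Proof.
  intros HD [a [b (H1 & H2 & H3 & H4)]].
  split; apply (deriv_tower_zero_outside D a b HD H4); lra.
Qed.

Lemma deriv_tower_bounded L D j : 0 <= L -> deriv_tower D ->
  exists M, 0 <= M /\ forall t, 0 <= t <= L -> Rabs (D j t) <= M.
Proof. intros HL HD. apply (derivable_bounded (D j) (D (S j)) 0 L HL). intros; apply HD. Qed.

Definition bump (L : R) (j : nat) (t : R) : R := (4 / L) ^ j * Drho j (4 / L * t + -2).

Lemma bump_test L : 0 < L -> deriv_tower (bump L) /\ supp_in L (bump L).
Proof.
  intros HL. split; [apply deriv_tower_affine, Drho_tower|].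
  exists (L / 4), (3 * L / 4). repeat split; try lra.
  intros t Ht. unfold bump. simpl. rewrite Drho0, rho_out; [ring|].
  assert (H4L : 0 < 4 / L) by (apply Rdiv_lt_0_compat; lra).
  destruct Ht as [Ht|Ht]; [left|right].
  - apply Rmult_lt_compat_l with (r := 4 / L) in Ht; auto.
    replace (4 / L * (L / 4)) with 1 in Ht by (field; lra). lra.
  - apply Rmult_lt_compat_l with (r := 4 / L) in Ht; auto.
    replace (4 / L * (3 * L / 4)) with 3 in Ht by (field; lra). lra.
Qed.

Lemma HKint_bump L : 0 < L -> HKint (bump L 0) 0 L (L / 4 * rho_mass).
Proof.
  intros HL.
  replace (L / 4 * rho_mass) with
    (L / 4 * rho_int (4 / L * L + -2) - L / 4 * rho_int (4 / L * 0 + -2)).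
  - apply (HKint_FTC (fun t => L / 4 * rho_int (4 / L * t + -2))); [lra|].
    intros t _. unfold bump. simpl. rewrite Drho0.
    replace (1 * rho (4 / L * t + -2)) with (L / 4 * (rho (4 / L * t + -2) * (4 / L)))
      by (field; lra).
    change (derivable_pt_lim (mult_real_fct (L / 4) (comp rho_int (fun t => 4 / L * t + -2))) t
      (L / 4 * (rho (4 / L * t + -2) * (4 / L)))).
    apply derivable_pt_lim_scal, derivable_pt_lim_comp; [apply affine_deriv | apply rho_int_deriv].
  - rewrite rho_int_right, rho_int_left; [ring | |].
    + replace (4 / L * 0 + -2) with (-2) by ring. lra.
    + replace (4 / L * L + -2) with 2 by (field; lra). lra.
Qed.

(* A Lipschitz function with vanishing weak derivative is constant: it is affine by the
   du Bois-Reymond lemma, and testing against [bump] kills the slope. *)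
Theorem const_of_weak_deriv_zero L f f' : 0 < L -> W1inf L f f' ->
  (forall phi phi', test_fun L phi phi' -> HKint (fun t => f t * phi' t) 0 L 0) ->
  exists A, forall t, 0 <= t <= L -> f t = A.
Proof.
  intros HL HW Hweak.
  destruct (W1inf_lip L f f' HW) as [K [HK0 HK]].
  destruct (du_bois_reymond f K L HL HK0 HK) as [A [B HAB]].
  { intros D HD HS. apply (Hweak (D 1%nat)), test_fun_of_tower; auto. }
  destruct (bump_test L HL) as [T S].
  assert (H1 : HKint (fun t => (B * t + A) * bump L 1 t) 0 L 0).
  { eapply HKint_ext; [|apply (Hweak _ _ (test_fun_of_tower L _ 0 T S))].
    intros t Ht. simpl. rewrite HAB by auto. ring. }
  assert (H2 : HKint (fun t => B * bump L 0 t + (B * t + A) * bump L 1 t) 0 L 0).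
  { assert (HF := HKint_FTC (fun t => (B * t + A) * bump L 0 t)
                    (fun t => B * bump L 0 t + (B * t + A) * bump L 1 t) 0 L ltac:(lra)).
    destruct (supp_in_ends L _ 0 T S) as [E0 EL]. cbv beta in HF.
    rewrite E0, EL, !Rmult_0_r, Rminus_0_r in HF.
    apply HF. intros t _.
    exact (derivable_pt_lim_mult (fun t => B * t + A) (bump L 0) t B (bump L 1 t)
             (affine_deriv B A t) (T 0%nat t)). }
  assert (H3 : HKint (fun t => B * bump L 0 t) 0 L 0).
  { pose proof (HKint_minus _ _ 0 L 0 0 H2 H1) as HM. rewrite Rminus_0_r in HM.
    eapply HKint_ext; [|apply HM]. intros; simpl; ring. }
  pose proof (HKint_unique _ 0 L _ _ ltac:(lra) H3 (HKint_scal B _ 0 L _ (HKint_bump L HL))) as HB.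
  pose proof rho_mass_pos.
  assert (B = 0).
  { symmetry in HB. apply Rmult_integral in HB. destruct HB as [|HB]; auto.
    apply Rmult_integral in HB. lra. }
  exists A. intros t Ht. rewrite HAB by auto. subst B. ring.
Qed.

Lemma bound_finite_family (n : nat) (L : R) (g : nat -> R -> R) :
  (forall i, (i < n)%nat -> exists M, forall t, 0 <= t <= L -> Rabs (g i t) <= M) ->
  exists M, 0 <= M /\ forall i t, (i < n)%nat -> 0 <= t <= L -> Rabs (g i t) <= M.
Proof.
  induction n as [|n IH]; intros H; [exists 0; split; [lra | intros; lia]|].
  destruct IH as [M1 [HM1 HM1']]; [intros i Hi; apply H; lia|].
  destruct (H n ltac:(lia)) as [M2 HM2].
  exists (Rmax M1 M2). split; [eapply Rle_trans; [apply HM1 | apply Rmax_l]|].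
  intros i t Hi Ht. destruct (Nat.eq_dec i n) as [->|Hin].
  - eapply Rle_trans; [apply HM2; auto | apply Rmax_r].
  - eapply Rle_trans; [apply HM1'; auto; lia | apply Rmax_l].
Qed.

Lemma null_norm1 (n : nat) (e : nat -> R -> R) a b :
  (forall i, (i < n)%nat -> null_on (e i) a b) -> null_on (fun t => norm1 n (fun i => e i t)) a b.
Proof.
  induction n as [|n IH]; intros H.
  - intros eps He. exists (fun _ => 1). split; [intros; lra|]. intros P _. simpl. clear H.
    replace (abs_rsum (fun _ : R => 0) a P) with 0; [lra|].
    revert a. induction P as [|[t x] P IHP]; simpl; intros; auto. rewrite Rabs_R0, <- IHP; ring.
  - simpl. apply (null_le (fun t => Rabs (norm1 n (fun i => e i t)) + Rabs (e n t)) _ 1); [lra| |].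
    + apply null_add; [apply IH; intros; apply H; lia | apply H; lia].
    + intros t _. pose proof (norm1_nonneg n (fun i => e i t)). pose proof (Rabs_pos (e n t)).
      rewrite (Rabs_right (norm1 n (fun i => e i t))) by lra.
      rewrite !(Rabs_right (norm1 n (fun i => e i t) + Rabs (e n t))) by lra. lra.
Qed.

Lemma choice_nat {X : Type} (x0 : X) (n : nat) (P : nat -> X -> Prop) :
  (forall i, (i < n)%nat -> exists x, P i x) ->
  exists F : nat -> X, forall i, (i < n)%nat -> P i (F i).
Proof.
  intros H.
  assert (H' : forall i, exists x, (i < n)%nat -> P i x).
  { intros i. destruct (lt_dec i n) as [Hi|Hi];
      [destruct (H i Hi) as [x Hx]; exists x; auto | exists x0; intros; lia]. }
  exists (fun i => proj1_sig (constructive_indefinite_description _ (H' i))).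
  intros i Hi. destruct (constructive_indefinite_description _ (H' i)); simpl; auto.
Qed.

(** * Weak solutions of [u'' + k^2 u = 0] *)

Lemma weak_second_form L k ti ti' : 0 < L -> W1inf L ti ti' ->
  (forall D, deriv_tower D -> supp_in L D ->
     HKint (fun t => ti' t * D 1%nat t - k ^ 2 * ti t * D 0%nat t) 0 L 0) ->
  forall D, deriv_tower D -> supp_in L D ->
    HKint (fun t => ti t * D 2%nat t + k ^ 2 * ti t * D 0%nat t) 0 L 0.
Proof.
  intros HL HW Hweak D HD HS.
  destruct (W1inf_deriv_bound L ti ti' HW) as [M [_ HM]].
  pose proof (HKint_by_parts ti' ti (D 1%nat) (D 2%nat) 0 L M ltac:(lra) HM
                (W1inf_HKint L ti ti' HW) ltac:(intros; apply HD)) as HP.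
  destruct (supp_in_ends L D 1 HD HS) as [E0 EL]. rewrite E0, EL, !Rmult_0_r, Rminus_0_r in HP.
  pose proof (HKint_minus _ _ 0 L 0 0 HP (Hweak D HD HS)) as HM'. rewrite Rminus_0_r in HM'.
  eapply HKint_ext; [|apply HM']. intros t _. cbv beta. ring.
Qed.

Definition clampL (L t : R) : R := Rmax 0 (Rmin L t).

Lemma clampL_in L t : 0 <= L -> 0 <= clampL L t <= L.
Proof. intros. unfold clampL, Rmax, Rmin. destr_le; lra. Qed.

Lemma clampL_id L t : 0 <= t <= L -> clampL L t = t.
Proof. intros. unfold clampL, Rmax, Rmin. destr_le; lra. Qed.

Lemma clampL_lip L s t : 0 <= L -> Rabs (clampL L s - clampL L t) <= Rabs (s - t).
Proof.
  intros HL. pose proof (Rle_abs (s - t)). pose proof (Rle_abs (- (s - t))). rewrite Rabs_Ropp in *.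
  unfold clampL, Rmax, Rmin. destr_le; apply Rabs_le_between; lra.
Qed.

(* [ti] is extended constantly outside [0, L] so that its primitives are defined on [R]. *)
Lemma lip_double_primitive L ti K : 0 < L -> 0 <= K ->
  (forall s t, 0 <= s <= L -> 0 <= t <= L -> Rabs (ti s - ti t) <= K * Rabs (s - t)) ->
  exists S T : R -> R,
    (forall x, derivable_pt_lim S x (T x)) /\
    (forall x, 0 <= x <= L -> derivable_pt_lim T x (ti x)) /\
    (forall D, deriv_tower D -> supp_in L D ->
       HKint (fun t => S t * D 2%nat t - ti t * D 0%nat t) 0 L 0).
Proof.
  intros HL HK Hlip.
  set (tc := fun t => ti (clampL L t)).
  assert (Htc_eq : forall t, 0 <= t <= L -> tc t = ti t)
    by (intros; unfold tc; rewrite clampL_id; auto).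
  assert (Htc_cont : forall x, continuous tc x).
  { apply (lip_continuous tc K HK). intros s t. unfold tc.
    eapply Rle_trans; [apply Hlip; apply clampL_in; lra|].
    apply Rmult_le_compat_l; auto. apply clampL_lip; lra. }
  set (T := fun t => RInt tc 0 t).
  assert (HT : forall x, derivable_pt_lim T x (tc x)) by (apply RInt_derivable; auto).
  assert (HT_cont : forall x, continuous T x).
  { intros x. apply continuity_pt_filterlim.
    apply (derivable_continuous_pt _ _ (exist _ (tc x) (HT x))). }
  set (S := fun t => RInt T 0 t).
  assert (HS : forall x, derivable_pt_lim S x (T x)) by (apply RInt_derivable; auto).
  exists S, T. split; [auto|]. split; [intros x Hx; replace (ti x) with (tc x) by auto; auto|].
  intros D HD HSu.
  assert (HF : HKint (fun t => S t * D 2%nat t - tc t * D 0%nat t) 0 L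
               ((S L * D 1%nat L - T L * D 0%nat L) - (S 0 * D 1%nat 0 - T 0 * D 0%nat 0))).
  { apply (HKint_FTC (fun t => S t * D 1%nat t - T t * D 0%nat t)); [lra|].
    intros t _.
    replace (S t * D 2%nat t - tc t * D 0%nat t) with
      ((T t * D 1%nat t + S t * D 2%nat t) - (tc t * D 0%nat t + T t * D 1%nat t)) by ring.
    apply (derivable_pt_lim_minus (mult_fct S (D 1%nat)) (mult_fct T (D 0%nat)));
      apply derivable_pt_lim_mult; auto. }
  destruct (supp_in_ends L D 0 HD HSu) as [E0 EL]. destruct (supp_in_ends L D 1 HD HSu) as [F0 FL].
  rewrite E0, EL, F0, FL, !Rmult_0_r, !Rminus_0_r in HF.
  eapply HKint_ext; [|apply HF]. intros t Ht. cbv beta. rewrite Htc_eq; auto.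
Qed.

(* [ti + k^2 S] has vanishing weak second derivative, so it is affine; hence
   [ti = A + B t - k^2 S] is [C^2] with [ti'' = - k^2 ti]. *)
Theorem weak_harmonic_regular L k ti ti' : 0 < L -> W1inf L ti ti' ->
  (forall D, deriv_tower D -> supp_in L D ->
     HKint (fun t => ti' t * D 1%nat t - k ^ 2 * ti t * D 0%nat t) 0 L 0) ->
  exists F v : R -> R, (forall t, derivable_pt_lim F t (v t)) /\
    (forall t, 0 <= t <= L -> derivable_pt_lim v t (- k ^ 2 * F t)) /\
    (forall t, 0 <= t <= L -> F t = ti t) /\
    (forall t, 0 <= t <= L -> HKint (fun s => ti' s - v s) 0 t 0).
Proof.
  intros HL HW Hweak.
  destruct (W1inf_lip L ti ti' HW) as [Kt [HKt0 HKt]].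
  destruct (lip_double_primitive L ti Kt HL HKt0 HKt) as [S [T [HS [HT HST]]]].
  destruct (derivable_bounded T ti 0 L ltac:(lra) HT) as [MT [HMT0 HMT]].
  pose proof (pow2_ge_0 k) as Hk2.
  set (U := fun t => ti t + k ^ 2 * S t).
  pose proof (lip_plus_scaled ti S T Kt MT (k ^ 2) L Hk2 HKt ltac:(intros; apply HS) HMT) as HU.
  assert (HUD : forall D, deriv_tower D -> supp_in L D -> HKint (fun t => U t * D 2%nat t) 0 L 0).
  { intros D HD HSu.
    pose proof (HKint_plus _ _ 0 L 0 (k ^ 2 * 0) (weak_second_form L k ti ti' HL HW Hweak D HD HSu)
                  (HKint_scal (k ^ 2) _ 0 L 0 (HST D HD HSu))) as HH.
    rewrite Rmult_0_r, Rplus_0_r in HH.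
    eapply HKint_ext; [|apply HH]. intros t _. unfold U. ring. }
  assert (HUK : 0 <= Kt + k ^ 2 * MT) by (pose proof (Rmult_le_pos _ _ Hk2 HMT0); lra).
  destruct (du_bois_reymond U _ L HL HUK HU HUD) as [A [B HAB]].
  assert (HFd : forall t, derivable_pt_lim (fun t => A + B * t - k ^ 2 * S t) t (B - k ^ 2 * T t)).
  { intros t.
    replace (fun t => A + B * t - k ^ 2 * S t) with (fun t => (B * t + A) - k ^ 2 * S t)
      by (apply functional_extensionality; intros; ring).
    exact (derivable_pt_lim_minus (fun t => B * t + A) (mult_real_fct (k ^ 2) S) t B (k ^ 2 * T t)
             (affine_deriv B A t) (derivable_pt_lim_scal S (k ^ 2) t (T t) (HS t))). }
  assert (HFeq : forall t, 0 <= t <= L -> A + B * t - k ^ 2 * S t = ti t)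
    by (intros t Ht; specialize (HAB t Ht); unfold U in HAB; lra).
  exists (fun t => A + B * t - k ^ 2 * S t), (fun t => B - k ^ 2 * T t).
  split; [auto|]. split; [|split; [auto|]].
  - intros t Ht. rewrite HFeq by auto.
    replace (- k ^ 2 * ti t) with (0 - k ^ 2 * ti t) by ring.
    apply (derivable_pt_lim_minus (fct_cte B) (mult_real_fct (k ^ 2) T));
      [apply derivable_pt_lim_const | apply derivable_pt_lim_scal; auto].
  - intros t Ht.
    pose proof (W1inf_HKint L ti ti' HW 0 t ltac:(lra) ltac:(lra) ltac:(lra)) as E1.
    pose proof (HKint_FTC _ _ 0 t ltac:(lra) (fun s _ => HFd s)) as E2.
    pose proof (HKint_minus _ _ 0 t _ _ E1 E2) as HM. cbv beta in HM.
    rewrite !HFeq, !Rminus_diag in HM by lra. exact HM.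
Qed.

Lemma dot_derivable (n : nat) (a b : R -> nat -> R) (a' b' : nat -> R) x :
  (forall i, (i < n)%nat -> derivable_pt_lim (fun t => a t i) x (a' i)) ->
  (forall i, (i < n)%nat -> derivable_pt_lim (fun t => b t i) x (b' i)) ->
  derivable_pt_lim (fun t => dot n (a t) (b t)) x (dot n a' (b x) + dot n (a x) b').
Proof.
  induction n as [|n IH]; intros Ha Hb; simpl.
  - rewrite Rplus_0_r. apply (derivable_pt_lim_const 0 x).
  - replace (dot n a' (b x) + a' n * b x n + (dot n (a x) b' + a x n * b' n)) with
      ((dot n a' (b x) + dot n (a x) b') + (a' n * b x n + a x n * b' n)) by ring.
    apply (derivable_pt_lim_plus (fun t => dot n (a t) (b t)) (fun t => a t n * b t n)).
    + apply IH; intros; [apply Ha | apply Hb]; lia.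
    + apply (derivable_pt_lim_mult (fun t => a t n) (fun t => b t n)); [apply Ha | apply Hb]; lia.
Qed.

Lemma dot_derivable_r (n : nat) (mu : nat -> R) (b : R -> nat -> R) (b' : nat -> R) x :
  (forall i, (i < n)%nat -> derivable_pt_lim (fun t => b t i) x (b' i)) ->
  derivable_pt_lim (fun t => dot n mu (b t)) x (dot n mu b').
Proof.
  intros Hb. replace (dot n mu b') with (dot n (fun _ => 0) (b x) + dot n mu b').
  - apply (dot_derivable n (fun _ => mu) b (fun _ => 0) b' x); auto.
    intros; apply (derivable_pt_lim_const (mu i) x).
  - rewrite dot_veq0_l; [ring | intros i _; auto].
Qed.

Lemma harmonic_invariant k L F v : 0 < k ->
  (forall t, derivable_pt_lim F t (v t)) ->
  (forall t, 0 <= t <= L -> derivable_pt_lim v t (- k ^ 2 * F t)) ->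
  forall t, 0 <= t <= L -> cos (k * t) * F t + (- sin (k * t) / k) * v t = F 0.
Proof.
  intros Hk HF Hv t Ht.
  assert (Hc : forall c, derivable_pt_lim (fun t => cos (k * t)) c (- k * sin (k * c)))
    by (intros; apply is_derive_Reals; auto_derive; auto; ring).
  assert (Hs : forall c, derivable_pt_lim (fun t => sin (k * t) / k) c (cos (k * c)))
    by (intros; apply is_derive_Reals; auto_derive; auto; field; lra).
  pose (z := fun t => cos (k * t) * F t - sin (k * t) / k * v t).
  assert (E : z t = z 0).
  { apply (eq_of_deriv_zero z (fun c => (- k * sin (k * c) * F c + cos (k * c) * v c)
             - (cos (k * c) * v c + sin (k * c) / k * (- k ^ 2 * F c))) 0 t); try lra.
    - intros c Hc'. unfold z.
      exact (derivable_pt_lim_minus (mult_fct (fun t => cos (k * t)) F)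
               (mult_fct (fun t => sin (k * t) / k) v) c _ _
               (derivable_pt_lim_mult _ F c _ _ (Hc c) (HF c))
               (derivable_pt_lim_mult _ v c _ _ (Hs c) (Hv c ltac:(lra)))).
    - intros c _. field. lra. }
  unfold z in E. rewrite Rmult_0_r, cos_0, sin_0 in E.
  replace (- sin (k * t) / k * v t) with (- (sin (k * t) / k * v t)) by (field; lra). lra.
Qed.

Lemma test_family_props n L (xi xi' : R -> nat -> R) : 0 <= L ->
  (forall i, (i < n)%nat -> test_fun L (fun t => xi t i) (fun t => xi' t i)) ->
  (forall i, (i < n)%nat -> forall t, derivable_pt_lim (fun t => xi t i) t (xi' t i)) /\
  (forall i, (i < n)%nat -> xi 0 i = 0 /\ xi L i = 0) /\
  exists Mx, 0 <= Mx /\ forall i t, (i < n)%nat -> 0 <= t <= L ->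
    Rabs (xi t i) <= Mx /\ Rabs (xi' t i) <= Mx.
Proof.
  intros HL Hxi.
  destruct (choice_nat (fun (_ : nat) (_ : R) => 0) n
    (fun i D => deriv_tower D /\ supp_in L D /\ D 0%nat = (fun t => xi t i)
                /\ D 1%nat = (fun t => xi' t i))) as [Dx HDx].
  { intros i Hi. apply tower_of_test_fun; auto. }
  split; [|split].
  - intros i Hi t. destruct (HDx i Hi) as (T1 & T2 & T3 & T4).
    rewrite <- T3. change (xi' t i) with ((fun t => xi' t i) t). rewrite <- T4. apply T1.
  - intros i Hi. destruct (HDx i Hi) as (T1 & T2 & T3 & T4).
    destruct (supp_in_ends L (Dx i) 0 T1 T2) as [Z0 ZL]. rewrite T3 in Z0, ZL. auto.
  - destruct (bound_finite_family n L (fun i t => Rmax (Rabs (xi t i)) (Rabs (xi' t i))))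
      as [Mx [HMx0 HMx]].
    + intros i Hi. destruct (HDx i Hi) as (T1 & T2 & T3 & T4).
      destruct (deriv_tower_bounded L (Dx i) 0 HL T1) as [M1 [_ HM1]].
      destruct (deriv_tower_bounded L (Dx i) 1 HL T1) as [M2 [_ HM2]].
      rewrite T3 in HM1. rewrite T4 in HM2.
      exists (Rmax M1 M2). intros t Ht.
      rewrite Rabs_right by (apply Rle_ge; eapply Rle_trans; [apply Rabs_pos | apply Rmax_l]).
      apply Rmax_lub; [eapply Rle_trans; [apply HM1; auto | apply Rmax_l]
                      | eapply Rle_trans; [apply HM2; auto | apply Rmax_r]].
    + exists Mx. split; auto. intros i t Hi Ht. specialize (HMx i t Hi Ht).
      rewrite Rabs_right in HMx by (apply Rle_ge; eapply Rle_trans; [apply Rabs_pos | apply Rmax_l]).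
      pose proof (Rmax_l (Rabs (xi t i)) (Rabs (xi' t i))).
      pose proof (Rmax_r (Rabs (xi t i)) (Rabs (xi' t i))). lra.
Qed.

Lemma abs_le_of_sq a b : 0 <= b -> a * a <= b * b -> Rabs a <= b.
Proof. intros Hb H. apply Rabs_le_between. split; nra. Qed.

(** * The case [tau'' + k^2 tau = 0] *)

(* [F], [v] are the smooth representatives of [tau], [tau']; the new multiplier is [tau 0]
   and the new density is [1 + C + int_0^t beta (tau 0 . tau')]. *)
Section Harmonic.

Variables (n : nat) (L k : R) (beta : R -> R) (tau tau' F v : R -> nat -> R).
Hypothesis HL : 0 < L.
Hypothesis Hk : 0 <= k.
Hypothesis Hbeta : beta_hyp L beta.
Hypothesis Htau : forall i, (i < n)%nat -> W1inf L (fun t => tau t i) (fun t => tau' t i).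
Hypothesis Hunit : forall t, 0 <= t <= L -> dot n (tau t) (tau t) = 1.
Hypothesis HF : forall i, (i < n)%nat -> forall t, derivable_pt_lim (fun t => F t i) t (v t i).
Hypothesis Hv : forall i, (i < n)%nat -> forall t, 0 <= t <= L ->
  derivable_pt_lim (fun t => v t i) t (- k ^ 2 * F t i).
Hypothesis HFt : forall t, 0 <= t <= L -> veq n (F t) (tau t).
Hypothesis He : forall i, (i < n)%nat -> forall t, 0 <= t <= L ->
  HKint (fun s => tau' s i - v s i) 0 t 0.

Lemma harmonic_residual_null t1 : 0 <= t1 <= L ->
  null_on (fun t => norm1 n (vsub (tau' t) (v t))) 0 t1.
Proof.
  intros Ht1. apply (null_norm1 n (fun i t => tau' t i - v t i)). intros i Hi.
  apply null_of_HKint_zero; [lra|]. apply HKint_zero_sub. intros t Ht. apply He; auto; lra.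
Qed.

Lemma beta_bound : exists Mb, 0 <= Mb /\ forall t, 0 <= t <= L -> Rabs (beta t) <= Mb.
Proof.
  destruct Hbeta as [_ [mb [Mb [Hmb HmM]]]]. exists Mb.
  split; [destruct (HmM 0 ltac:(lra)); lra|].
  intros t Ht. destruct (HmM t Ht). rewrite Rabs_right by lra. lra.
Qed.

Lemma tau0_dot_v_lip : forall s t, 0 <= s <= L -> 0 <= t <= L ->
  Rabs (dot n (tau 0) (v s) - dot n (tau 0) (v t)) <= k ^ 2 * Rabs (s - t).
Proof.
  apply (lip_of_deriv_on _ (fun t => dot n (tau 0) (fun i => - k ^ 2 * F t i)) 0 L).
  - intros t Ht. apply dot_derivable_r. intros i Hi. apply Hv; auto.
  - intros t Ht. change (fun i => - k ^ 2 * F t i) with (vscale (- k ^ 2) (F t)).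
    rewrite dot_vscale_r, (dot_veq n _ (tau 0) _ (tau t)) by (auto; intros i _; auto).
    rewrite Rabs_mult, Rabs_Ropp, (Rabs_right (k ^ 2)) by (apply Rle_ge, pow2_ge_0).
    pose proof (cauchy_schwarz n (tau 0) (tau t)) as CS.
    rewrite (Hunit 0), (Hunit t) in CS by lra.
    assert (Rabs (dot n (tau 0) (tau t)) <= 1) by (apply abs_le_of_sq; lra).
    pose proof (pow2_ge_0 k). pose proof (Rabs_pos (dot n (tau 0) (tau t))). nra.
Qed.

Lemma tau0_dot_v_bounded :
  exists Cc, 0 <= Cc /\ forall t, 0 <= t <= L -> Rabs (dot n (tau 0) (v t)) <= Cc.
Proof.
  exists (Rabs (dot n (tau 0) (v 0)) + k ^ 2 * L).
  pose proof (pow2_ge_0 k) as Hk2. pose proof (Rabs_pos (dot n (tau 0) (v 0))) as Hv0.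
  split; [nra|]. intros t Ht. pose proof (tau0_dot_v_lip t 0 Ht ltac:(lra)) as Hlip.
  rewrite Rminus_0_r, (Rabs_right t) in Hlip by lra.
  replace (dot n (tau 0) (v t)) with
    (dot n (tau 0) (v 0) + (dot n (tau 0) (v t) - dot n (tau 0) (v 0))) by ring.
  eapply Rle_trans; [apply Rabs_triang|].
  assert (k ^ 2 * t <= k ^ 2 * L) by (apply Rmult_le_compat_l; lra). lra.
Qed.

(* [beta (tau 0 . tau') = beta (tau 0 . v) + beta (tau 0 . (tau' - v))]: the first term is
   integrable as [beta] has bounded variation and [tau 0 . v] is Lipschitz, the second is
   null. *)
Lemma harmonic_primitive : exists (I : R -> R) (B : R), I 0 = 0 /\
  forall t, 0 <= t <= L ->
    HKint (fun s => beta s * dot n (tau 0) (tau' s)) 0 t (I t) /\ Rabs (I t) <= B.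
Proof.
  set (c := fun t => dot n (tau 0) (v t)).
  destruct beta_bound as [Mb [HMb0 HMb]].
  destruct tau0_dot_v_bounded as [Cc [HCc0 HCc]].
  assert (Hint : forall t, exists I, 0 <= t <= L -> HKint (fun s => beta s * c s) 0 t I).
  { intros t. destruct (classic (0 <= t <= L)) as [Ht|Ht]; [|exists 0; intros; contradiction].
    destruct Hbeta as [[Vb HVb] _].
    destruct (HKint_exists_BV_mul beta L c Cc (k ^ 2) Mb t (ex_intro _ Vb HVb) HMb HCc
                (pow2_ge_0 k) tau0_dot_v_lip Ht) as [I HI].
    exists I; auto. }
  set (I := fun t => proj1_sig (constructive_indefinite_description _ (Hint t))).
  assert (HI : forall t, 0 <= t <= L -> HKint (fun s => beta s * c s) 0 t (I t)).
  { intros t Ht. unfold I. destruct (constructive_indefinite_description _ (Hint t)); simpl; auto. }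
  clearbody I.
  destruct (bound_finite_family n L (fun i t => tau 0 i)) as [Mmu [HMmu0 HMmu]].
  { intros i Hi. exists (Rabs (tau 0 i)). intros; lra. }
  exists I, (Mb * Cc * L). split.
  { apply (HKint_unique (fun s => beta s * c s) 0 0); [lra | apply HI; lra | apply HKint_degenerate]. }
  intros t Ht. split.
  - assert (HN : HKint (fun s => beta s * dot n (tau 0) (vsub (tau' s) (v s))) 0 t 0).
    { apply HKint_null, (null_le (fun s => norm1 n (vsub (tau' s) (v s))) _ (Mb * Mmu));
        [nra | apply harmonic_residual_null; auto|].
      intros s Hs. rewrite Rabs_mult, (Rabs_right (norm1 _ _)) by (apply Rle_ge, norm1_nonneg).
      rewrite Rmult_assoc. apply Rmult_le_compat; try apply Rabs_pos; [apply HMb; lra|].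
      apply dot_bound_norm1. intros i Hi; apply (HMmu i 0); auto; lra. }
    pose proof (HKint_plus _ _ 0 t _ _ (HI t Ht) HN) as HH. rewrite Rplus_0_r in HH.
    eapply HKint_ext; [|apply HH]. intros s Hs. unfold c. rewrite dot_vsub_r. ring.
  - assert (Mb * Cc * (t - 0) <= Mb * Cc * L) by (apply Rmult_le_compat_l; nra).
    enough (Rabs (I t) <= Mb * Cc * (t - 0)) by lra.
    apply (HKint_bound (fun s => beta s * c s) 0 t); [lra | | apply HI; auto].
    intros s Hs. rewrite Rabs_mult. apply Rmult_le_compat; try apply Rabs_pos;
      [apply HMb | apply HCc]; lra.
Qed.

Lemma harmonic_density :
  exists g, W1inf L g (fun t => beta t * dot n (tau 0) (tau' t)) /\
    forall t, 0 <= t <= L -> 1 <= g t.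
Proof.
  destruct harmonic_primitive as [I [B [HI0 HI]]].
  destruct beta_bound as [Mb [HMb0 HMb]].
  destruct (bound_finite_family n L (fun i t => tau 0 i)) as [Mmu [HMmu0 HMmu]].
  { intros i Hi. exists (Rabs (tau 0 i)). intros; lra. }
  destruct (bound_finite_family n L (fun i t => tau' t i)) as [Mt [HMt0 HMt]].
  { intros i Hi. destruct (W1inf_deriv_bound L _ _ (Htau i Hi)) as [M [_ HM]]. exists M; auto. }
  exists (fun t => B + 1 + I t). split; [split|].
  - exists (Mb * (Mmu * (INR n * Mt))). intros t Ht. rewrite Rabs_mult.
    apply Rmult_le_compat; try apply Rabs_pos; [apply HMb; auto|].
    eapply Rle_trans; [apply dot_bound_norm1; intros i Hi; apply (HMmu i 0); auto; lra|].
    apply Rmult_le_compat_l; auto. apply norm1_bound. intros; apply HMt; auto.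
  - intros t Ht. rewrite HI0. replace (B + 1 + I t - (B + 1 + 0)) with (I t) by ring.
    apply HI; auto.
  - intros t Ht. destruct (HI t Ht) as [_ H]. apply Rabs_le_between in H. lra.
Qed.

(* Since [tau 0] lies in [span {F t, v t}], its projection off [span {tau t, tau' t}] is
   controlled by [tau' t - v t]. *)
Lemma proj_perp_tau0_bound t y M : 0 < k -> 0 <= t <= L -> 0 <= M ->
  (forall i, (i < n)%nat -> Rabs (y i) <= M) ->
  Rabs (dot n (proj_perp n (tau t) (tau' t) (tau 0)) y)
  <= / k * norm1 n (vsub (tau' t) (v t)) * (INR n * M).
Proof.
  intros Hkp Ht HM Hy.
  set (gam := - sin (k * t) / k).
  assert (Heq : veq n (tau 0) (fun i => cos (k * t) * tau t i + gam * v t i)).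
  { intros i Hi. unfold gam. rewrite <- (HFt t Ht i Hi), <- (HFt 0 ltac:(lra) i Hi).
    symmetry. apply (harmonic_invariant k L (fun t => F t i) (fun t => v t i)); auto. }
  pose proof (proj_perp_bound n (tau t) (tau' t) (tau 0) (v t) (cos (k * t)) gam y) as PB.
  rewrite (Hunit t Ht) in PB. specialize (PB ltac:(lra) Heq).
  set (PX := dot n (proj_perp n (tau t) (tau' t) (tau 0)) y) in *.
  set (E := norm1 n (vsub (tau' t) (v t))).
  assert (Hik : 0 < / k) by (apply Rinv_0_lt_compat; auto).
  assert (G1 : gam * gam <= / k * / k).
  { unfold gam. pose proof (SIN_bound (k * t)).
    replace (- sin (k * t) / k * (- sin (k * t) / k)) with (sin (k * t) * sin (k * t) * (/ k * / k))
      by (field; lra).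
    assert (sin (k * t) * sin (k * t) <= 1) by nra. nra. }
  assert (G2 : dot n (vsub (tau' t) (v t)) (vsub (tau' t) (v t)) <= E * E) by apply dot_le_norm1.
  assert (G3 : dot n y y <= (INR n * M) * (INR n * M)) by (apply dot_self_bound; auto).
  pose proof (dot_nonneg n (vsub (tau' t) (v t))). pose proof (dot_nonneg n y).
  pose proof (Rle_0_sqr gam). unfold Rsqr in *.
  assert (HE0 : 0 <= E) by apply norm1_nonneg. pose proof (pos_INR n).
  apply abs_le_of_sq; [repeat apply Rmult_le_pos; lra|].
  eapply Rle_trans; [apply PB|].
  assert (K1 : gam * gam * dot n (vsub (tau' t) (v t)) (vsub (tau' t) (v t)) <= / k * / k * (E * E))
    by (apply Rmult_le_compat; auto).
  assert (K2 : 0 <= gam * gam * dot n (vsub (tau' t) (v t)) (vsub (tau' t) (v t)))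
    by (apply Rmult_le_pos; auto).
  apply Rle_trans with (/ k * / k * (E * E) * ((INR n * M) * (INR n * M)));
    [apply Rmult_le_compat; auto | right; ring].
Qed.

Lemma harmonic_weak_eq2 g : W1inf L g (fun t => beta t * dot n (tau 0) (tau' t)) ->
  forall phi phi', test_fun L phi phi' ->
    HKint (fun t => g t * phi' t + beta t * dot n (tau 0) (tau' t) * phi t) 0 L 0.
Proof.
  intros HgW phi phi' Htf. destruct (tower_of_test_fun L phi phi' Htf) as [D [HD [HS [HD0 HD1]]]].
  destruct (W1inf_deriv_bound L _ _ HgW) as [Mg' [_ HMg']].
  pose proof (HKint_by_parts _ g phi phi' 0 L Mg' ltac:(lra) HMg' (W1inf_HKint L _ _ HgW)) as HP.
  destruct (supp_in_ends L D 0 HD HS) as [Z0 ZL]. rewrite HD0 in Z0, ZL.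
  rewrite Z0, ZL, !Rmult_0_r, Rminus_0_r in HP.
  eapply HKint_ext; [|apply HP].
  - intros t _. cbv beta. ring.
  - intros t _. rewrite <- HD0, <- HD1. apply HD.
Qed.

Section TestFamily.

Variables (g : R -> R) (xi xi' : R -> nat -> R) (Mg Mg' Mx : R).
Hypothesis HgW : W1inf L g (fun t => beta t * dot n (tau 0) (tau' t)).
Hypothesis HMg : forall t, 0 <= t <= L -> Rabs (g t) <= Mg.
Hypothesis HMg' : forall t, 0 <= t <= L -> Rabs (beta t * dot n (tau 0) (tau' t)) <= Mg'.
Hypothesis Hxd : forall i, (i < n)%nat -> forall t, derivable_pt_lim (fun t => xi t i) t (xi' t i).
Hypothesis Hx0 : forall i, (i < n)%nat -> xi 0 i = 0 /\ xi L i = 0.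
Hypothesis HMx0 : 0 <= Mx.
Hypothesis HMx : forall i t, (i < n)%nat -> 0 <= t <= L -> Rabs (xi t i) <= Mx /\ Rabs (xi' t i) <= Mx.

Lemma harmonic_eq1_smooth_part :
  HKint (fun t => beta t * dot n (tau 0) (tau' t) * dot n (v t) (xi t)
                  + g t * (dot n (fun i => - k ^ 2 * F t i) (xi t) + dot n (v t) (xi' t))) 0 L 0.
Proof.
  pose proof (HKint_by_parts _ g (fun t => dot n (v t) (xi t))
                (fun t => dot n (fun i => - k ^ 2 * F t i) (xi t) + dot n (v t) (xi' t))
                0 L Mg' ltac:(lra) HMg' (W1inf_HKint L _ _ HgW)) as HP.
  assert (Hw : forall t, dot n (v t) (xi t) = dot n (xi t) (v t)) by (intros; apply dot_comm).
  cbv beta in HP. rewrite !Hw, !(dot_veq0_l n (xi _)), !Rmult_0_r, Rminus_0_r in HP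
    by (intros i Hi; apply Hx0; auto).
  apply HP. intros t Ht. apply dot_derivable; intros i Hi; [apply Hv | apply Hxd]; auto.
Qed.

Lemma harmonic_eq1_residual_part :
  HKint (fun t => g t * dot n (vsub (tau' t) (v t)) (xi' t)
                  + beta t * dot n (tau 0) (tau' t) * dot n (vsub (tau' t) (v t)) (xi t)) 0 L 0.
Proof.
  apply HKint_null, (null_le (fun t => norm1 n (vsub (tau' t) (v t))) _ (Mg * Mx + Mg' * Mx)).
  - assert (0 <= Mg) by (pose proof (HMg 0 ltac:(lra)); pose proof (Rabs_pos (g 0)); lra).
    assert (0 <= Mg')
      by (pose proof (HMg' 0 ltac:(lra)); pose proof (Rabs_pos (beta 0 * dot n (tau 0) (tau' 0))); lra).
    nra.
  - apply harmonic_residual_null; lra.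
  - intros t Ht. rewrite (Rabs_right (norm1 _ _)) by (apply Rle_ge, norm1_nonneg).
    eapply Rle_trans; [apply Rabs_triang|]. rewrite !Rabs_mult, !(dot_comm n (vsub _ _)).
    assert (Q1 : Rabs (dot n (xi' t) (vsub (tau' t) (v t))) <= Mx * norm1 n (vsub (tau' t) (v t)))
      by (apply dot_bound_norm1; intros i Hi; apply HMx; auto).
    assert (Q2 : Rabs (dot n (xi t) (vsub (tau' t) (v t))) <= Mx * norm1 n (vsub (tau' t) (v t)))
      by (apply dot_bound_norm1; intros i Hi; apply HMx; auto).
    pose proof (HMg' t Ht) as H'. rewrite Rabs_mult in H'.
    assert (Rabs (g t) * Rabs (dot n (xi' t) (vsub (tau' t) (v t)))
            <= Mg * (Mx * norm1 n (vsub (tau' t) (v t))))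
      by (apply Rmult_le_compat; try apply Rabs_pos; auto).
    assert (Rabs (beta t) * Rabs (dot n (tau 0) (tau' t)) * Rabs (dot n (xi t) (vsub (tau' t) (v t)))
            <= Mg' * (Mx * norm1 n (vsub (tau' t) (v t))))
      by (apply Rmult_le_compat; try apply Rabs_pos; auto; apply Rmult_le_pos; apply Rabs_pos).
    lra.
Qed.

Lemma harmonic_eq1_projection_part :
  HKint (fun t => k ^ 2 * beta t * dot n (proj_perp n (tau t) (tau' t) (tau 0)) (xi t)) 0 L 0.
Proof.
  destruct (Req_dec k 0) as [Hk0|Hk0].
  { eapply HKint_ext; [|apply HKint_zero]. intros t _. rewrite Hk0. ring. }
  assert (Hkp : 0 < k) by lra.
  destruct beta_bound as [Mb [HMb0 HMb]].
  apply HKint_null, (null_le (fun t => norm1 n (vsub (tau' t) (v t))) _ (k * Mb * (INR n * Mx))).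
  - pose proof (pos_INR n). repeat apply Rmult_le_pos; lra.
  - apply harmonic_residual_null; lra.
  - intros t Ht. rewrite (Rabs_right (norm1 _ _)) by (apply Rle_ge, norm1_nonneg).
    pose proof (proj_perp_tau0_bound t (xi t) Mx Hkp Ht HMx0 ltac:(intros i Hi; apply HMx; auto)).
    rewrite !Rabs_mult, (Rabs_right (k ^ 2)) by (apply Rle_ge, pow2_ge_0).
    apply Rle_trans with (k ^ 2 * Mb * (/ k * norm1 n (vsub (tau' t) (v t)) * (INR n * Mx))).
    + apply Rmult_le_compat; try apply Rabs_pos; auto.
      * apply Rmult_le_pos; [apply pow2_ge_0 | apply Rabs_pos].
      * apply Rmult_le_compat_l; [apply pow2_ge_0 | apply HMb; auto].
    + right. field. lra.
Qed.

End TestFamily.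

Lemma harmonic_weak_eq1 g : W1inf L g (fun t => beta t * dot n (tau 0) (tau' t)) ->
  forall xi xi' : R -> nat -> R,
    (forall i, (i < n)%nat -> test_fun L (fun t => xi t i) (fun t => xi' t i)) ->
    HKint (fun t =>
        g t * (dot n (tau' t) (xi' t) - k ^ 2 * dot n (tau t) (xi t))
        + beta t * dot n (tau 0) (tau' t) * dot n (tau' t) (xi t)
        + k ^ 2 * beta t * dot n (proj_perp n (tau t) (tau' t) (tau 0)) (xi t)) 0 L 0.
Proof.
  intros HgW xi xi' Hxi.
  destruct (test_family_props n L xi xi' ltac:(lra) Hxi) as [Hxd [Hx0 [Mx [HMx0 HMx]]]].
  destruct (W1inf_lip L _ _ HgW) as [Kg [HKg0 HKg]].
  destruct (W1inf_deriv_bound L _ _ HgW) as [Mg' [_ HMg']].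
  pose proof (lip_bound g Kg L HL HKg0 HKg) as HMg.
  pose proof (harmonic_eq1_smooth_part g xi xi' Mg' HgW HMg' Hxd Hx0) as P1.
  pose proof (harmonic_eq1_residual_part g xi xi' _ Mg' Mx HMg HMg' HMx0 HMx) as P2.
  pose proof (harmonic_eq1_projection_part xi xi' Mx HMx0 HMx) as P3.
  pose proof (HKint_plus _ _ 0 L _ _ (HKint_plus _ _ 0 L _ _ P1 P2) P3) as HS.
  rewrite !Rplus_0_r in HS.
  eapply HKint_ext; [|apply HS]. intros t Ht. cbv beta.
  change (fun i => - k ^ 2 * F t i) with (vscale (- k ^ 2) (F t)).
  rewrite !dot_vsub_l, dot_vscale_l, (dot_veq n (F t) (tau t) (xi t) (xi t))
    by (auto; intros i _; auto).
  rewrite (dot_comm n (tau' t)), (dot_comm n (tau t)), (dot_comm n (v t)). ring.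
Qed.

Theorem harmonic_case :
  exists (ft ft' : R -> R) (lt : nat -> R),
    W1inf L ft ft' /\ (forall t, 0 <= t <= L -> 0 <= ft t) /\
    (exists t, 0 <= t <= L /\ ft t <> 0) /\ dot n lt lt = 1 /\
    weak_eqs n L k beta tau tau' ft ft' lt.
Proof.
  destruct harmonic_density as [g [HgW Hg1]].
  exists g, (fun t => beta t * dot n (tau 0) (tau' t)), (tau 0).
  split; [auto|]. split; [intros t Ht; specialize (Hg1 t Ht); lra|].
  split; [exists 0; split; [lra|]; specialize (Hg1 0 ltac:(lra)); lra|].
  split; [apply Hunit; lra|].
  split; [apply harmonic_weak_eq1 | apply harmonic_weak_eq2]; auto.
Qed.

End Harmonic.

(** * Constant densities and rescaling *)

Lemma null_of_const L f f' A : 0 < L -> W1inf L f f' -> (forall t, 0 <= t <= L -> f t = A) ->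
  null_on f' 0 L.
Proof.
  intros HL [_ Hf] HfA. apply null_of_HKint_zero; [lra|]. apply HKint_zero_sub.
  intros t Ht. specialize (Hf t Ht). rewrite (HfA t Ht), (HfA 0 ltac:(lra)), Rminus_diag in Hf.
  auto.
Qed.

(* With [f = A] constant and [lam = 0], the first equation tested against [D e_i] says
   that each component of [tau] solves [u'' + k^2 u = 0] weakly. *)
Lemma zero_multiplier_component n L k beta tau tau' f f' lam A i :
  0 < L -> (forall i, (i < n)%nat -> W1inf L (fun t => tau t i) (fun t => tau' t i)) ->
  W1inf L f f' -> A <> 0 -> (forall t, 0 <= t <= L -> f t = A) ->
  veq n lam (fun _ => 0) -> weak_eqs n L k beta tau tau' f f' lam -> (i < n)%nat ->
  forall D, deriv_tower D -> supp_in L D ->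
    HKint (fun t => tau' t i * D 1%nat t - k ^ 2 * tau t i * D 0%nat t) 0 L 0.
Proof.
  intros HL Htau Hf HA HfA Hlam [H1 _] Hi D HD HS.
  set (xi := fun t j => if Nat.eqb j i then D 0%nat t else 0).
  set (xi' := fun t j => if Nat.eqb j i then D 1%nat t else 0).
  assert (Hx : forall j, (j < n)%nat -> test_fun L (fun t => xi t j) (fun t => xi' t j)).
  { intros j _. unfold xi, xi'.
    destruct (Nat.eqb j i); [apply test_fun_of_tower | apply zero_test_fun]; auto. }
  destruct (W1inf_deriv_bound L _ _ (Htau i Hi)) as [Mt' [HMt'0 HMt']].
  destruct (deriv_tower_bounded L D 0 ltac:(lra) HD) as [MD [HMD0 HMD]].
  assert (Hn : HKint (fun t => f' t * (tau' t i * D 0%nat t)) 0 L 0).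
  { apply HKint_null, (null_le f' _ (Mt' * MD)); [nra | apply (null_of_const L f f' A); auto|].
    intros t Ht. rewrite !Rabs_mult, Rmult_comm.
    apply Rmult_le_compat_r; [apply Rabs_pos|]. apply Rmult_le_compat; try apply Rabs_pos; auto. }
  pose proof (HKint_minus _ _ 0 L 0 0 (H1 xi xi' Hx) Hn) as HM. rewrite Rminus_0_r in HM.
  pose proof (HKint_scal (/ A) _ 0 L 0 HM) as Hs. rewrite Rmult_0_r in Hs.
  eapply HKint_ext; [|apply Hs]. intros t Ht. cbv beta. unfold xi, xi'.
  rewrite !dot_basis, (proj_perp_veq0 n (tau t) (tau' t) lam Hlam i Hi), HfA by auto.
  field. auto.
Qed.

Theorem zero_multiplier_case n L k beta tau tau' f f' lam :
  0 < L -> beta_hyp L beta ->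
  (forall i, (i < n)%nat -> W1inf L (fun t => tau t i) (fun t => tau' t i)) ->
  (forall t, 0 <= t <= L -> dot n (tau t) (tau t) = 1) ->
  0 <= k -> W1inf L f f' -> (exists t, 0 <= t <= L /\ f t <> 0) ->
  veq n lam (fun _ => 0) -> weak_eqs n L k beta tau tau' f f' lam ->
  exists (ft ft' : R -> R) (lt : nat -> R),
    W1inf L ft ft' /\ (forall t, 0 <= t <= L -> 0 <= ft t) /\
    (exists t, 0 <= t <= L /\ ft t <> 0) /\ dot n lt lt = 1 /\
    weak_eqs n L k beta tau tau' ft ft' lt.
Proof.
  intros HL Hbeta Htau Hunit Hk Hf [t0 [Ht0 Hft0]] Hlam Hweak.
  destruct (const_of_weak_deriv_zero L f f' HL Hf) as [A HfA].
  { intros phi phi' Hphi. eapply HKint_ext; [|apply (proj2 Hweak phi phi' Hphi)].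
    intros t _. cbv beta. rewrite dot_veq0_l by auto. ring. }
  assert (HA : A <> 0) by (rewrite <- (HfA t0 Ht0); auto).
  destruct (choice_nat ((fun _ : R => 0), (fun _ : R => 0)) n
    (fun i Fv => (forall t, derivable_pt_lim (fst Fv) t (snd Fv t)) /\
       (forall t, 0 <= t <= L -> derivable_pt_lim (snd Fv) t (- k ^ 2 * fst Fv t)) /\
       (forall t, 0 <= t <= L -> fst Fv t = tau t i) /\
       (forall t, 0 <= t <= L -> HKint (fun s => tau' s i - snd Fv s) 0 t 0))) as [Fv HFv].
  { intros i Hi.
    destruct (weak_harmonic_regular L k (fun t => tau t i) (fun t => tau' t i) HL (Htau i Hi)
                (zero_multiplier_component n L k beta tau tau' f f' lam A i
                   HL Htau Hf HA HfA Hlam Hweak Hi)) as [F [v HH]].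
    exists (F, v). exact HH. }
  apply (harmonic_case n L k beta tau tau' (fun t i => fst (Fv i) t) (fun t i => snd (Fv i) t));
    auto.
  - intros i Hi. apply HFv; auto.
  - intros i Hi. apply HFv; auto.
  - intros t Ht i Hi. apply HFv; auto.
  - intros i Hi. apply HFv; auto.
Qed.

Lemma W1inf_scale c L f f' : W1inf L f f' -> W1inf L (fun t => c * f t) (fun t => c * f' t).
Proof.
  intros [[M HM] Hf]. split.
  - exists (Rabs c * M). intros t Ht. rewrite Rabs_mult.
    apply Rmult_le_compat_l; [apply Rabs_pos | auto].
  - intros t Ht. replace (c * f t - c * f 0) with (c * (f t - f 0)) by ring.
    apply HKint_scal; auto.
Qed.

Lemma weak_eqs_scale c n L k beta tau tau' f f' lam :
  weak_eqs n L k beta tau tau' f f' lam ->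
  weak_eqs n L k beta tau tau' (fun t => c * f t) (fun t => c * f' t) (vscale c lam).
Proof.
  intros [W1 W2]. split.
  - intros xi xi' Hxi. pose proof (HKint_scal c _ 0 L 0 (W1 xi xi' Hxi)) as HH.
    rewrite Rmult_0_r in HH. eapply HKint_ext; [|apply HH]. intros t _. cbv beta.
    rewrite proj_perp_scale, dot_vscale_l. ring.
  - intros phi phi' Hphi. pose proof (HKint_scal c _ 0 L 0 (W2 phi phi' Hphi)) as HH.
    rewrite Rmult_0_r in HH. eapply HKint_ext; [|apply HH]. intros t _. cbv beta.
    rewrite dot_vscale_l. ring.
Qed.

Lemma dot_normalize n x : dot n x x <> 0 ->
  dot n (vscale (/ sqrt (dot n x x)) x) (vscale (/ sqrt (dot n x x)) x) = 1.
Proof.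
  intros Hx. pose proof (dot_nonneg n x) as H0.
  assert (Hs : 0 < sqrt (dot n x x)) by (apply sqrt_lt_R0; lra).
  rewrite dot_vscale_l, dot_vscale_r, <- Rmult_assoc, <- Rinv_mult, sqrt_sqrt by lra.
  field. auto.
Qed.

Theorem mainTheorem11 (n : nat) (L k : R) (beta : R -> R)
    (tau tau' : R -> nat -> R) (f f' : R -> R) (lam : nat -> R) :
  0 < L ->
  beta_hyp L beta ->
  (forall i, (i < n)%nat -> W1inf L (fun t => tau t i) (fun t => tau' t i)) ->
  (forall t, 0 <= t <= L -> dot n (tau t) (tau t) = 1) ->
  0 <= k ->
  W1inf L f f' ->
  (forall t, 0 <= t <= L -> 0 <= f t) ->
  (exists t, 0 <= t <= L /\ f t <> 0) ->
  weak_eqs n L k beta tau tau' f f' lam ->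
  exists (ft ft' : R -> R) (lt : nat -> R),
    W1inf L ft ft' /\
    (forall t, 0 <= t <= L -> 0 <= ft t) /\
    (exists t, 0 <= t <= L /\ ft t <> 0) /\
    dot n lt lt = 1 /\
    weak_eqs n L k beta tau tau' ft ft' lt.
Proof.
  intros HL Hbeta Htau Hunit Hk Hf Hfnn Hfnz Hweak.
  destruct (Req_dec (dot n lam lam) 0) as [H0|H0].
  - apply (zero_multiplier_case n L k beta tau tau' f f' lam); auto. apply dot_self_eq0; auto.
  - set (c := / sqrt (dot n lam lam)).
    assert (Hc : 0 < c)
      by (apply Rinv_0_lt_compat, sqrt_lt_R0; pose proof (dot_nonneg n lam); lra).
    exists (fun t => c * f t), (fun t => c * f' t), (vscale c lam).
    split; [apply W1inf_scale; auto|].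
    split; [intros t Ht; apply Rmult_le_pos; [lra | auto]|].
    split; [destruct Hfnz as [t0 [Ht0 Hft0]]; exists t0; split; auto;
            apply Rmult_integral_contrapositive; split; lra|].
    split; [apply dot_normalize; auto | apply weak_eqs_scale; auto].
Qed.
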